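(* Let $E$ be a real normed space ordered by a proper closed cone $C$, and assume at least one of: (1) $C$ has nonempty interior; (2) $E$ is complete; (3) $C$ is a distance set (for every $x\in E$ there is $y\in C$ with $\|x-y\|=\operatorname{dist}(x,C)$). Let $0<T\leq\infty$, $I=[0,T)$, $U\subset E$ open and convex, and $f\colon I\times U\to E$ a continuous locally Lipschitz map such that $f(t,\cdot)$ is quasi-monotone increasing and convex on $U$ for all $t\in I$. Let $0<t_0\leq T$ and let $x_1,x_2,x_3\colon[0,t_0)\to U$ be differentiable maps with $\dot x_i(t)=f(t,x_i(t))$ for $i=1,2,3$ and $x_3(0)=\lambda x_1(0)+(1-\lambda)x_2(0)$ for some $\lambda\in[0,1]$. Then $x_3(t)\leq\lambda x_1(t)+(1-\lambda)x_2(t)$ for all $t\in[0,t_0)$.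
   Context: A cone $C$ ($\lambda C\subset C$ for $\lambda>0$) is proper if $C+C\subset C$ and $C\cap(-C)=\{0\}$; it induces the partial order $x\leq y$ iff $y-x\in C$. $C^*=\{l\in E^*: l(x)\geq0\ \forall x\in C\}$, where $E^*$ is the (continuous) dual. A map $g\colon D\to E$ is quasi-monotone increasing if for all $x,y\in D$, $l\in C^*$: $x\leq y$, $l(x)=l(y)$ imply $l(g(x))\leq l(g(y))$. A map $g$ is convex if its domain is convex and $g(\lambda x+(1-\lambda)y)\leq\lambda g(x)+(1-\lambda)g(y)$ for $\lambda\in[0,1]$. $f$ is locally Lipschitz if for every compact $K\subset U$ and every $t\in I$, $\sup_{0\leq\tau\leq t,\,x_1\neq x_2\in K}\|f(\tau,x_2)-f(\tau,x_1)\|/\|x_2-x_1\|<\infty$. *)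

From Stdlib Require Import Reals List.
Open Scope R_scope.

Record NormedSpace (E : Type) := {
  vadd : E -> E -> E;
  vzero : E;
  vopp : E -> E;
  vscal : R -> E -> E;
  vnorm : E -> R;
  vadd_assoc : forall x y z, vadd x (vadd y z) = vadd (vadd x y) z;
  vadd_comm : forall x y, vadd x y = vadd y x;
  vadd_0 : forall x, vadd x vzero = x;
  vadd_opp : forall x, vadd x (vopp x) = vzero;
  vscal_assoc : forall a b x, vscal a (vscal b x) = vscal (a * b) x;
  vscal_1 : forall x, vscal 1 x = x;
  vscal_distr_v : forall a x y, vscal a (vadd x y) = vadd (vscal a x) (vscal a y);
  vscal_distr_s : forall a b x, vscal (a + b) x = vadd (vscal a x) (vscal b x);
  vnorm_eq0 : forall x, vnorm x = 0 -> x = vzero;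
  vnorm_scal : forall a x, vnorm (vscal a x) = Rabs a * vnorm x;
  vnorm_triangle : forall x y, vnorm (vadd x y) <= vnorm x + vnorm y
}.

Arguments vadd {E} _ _ _.
Arguments vzero {E} _.
Arguments vopp {E} _ _.
Arguments vscal {E} _ _ _.
Arguments vnorm {E} _ _.

Section NS.
Context {E : Type} (N : NormedSpace E).

Definition vsub (x y : E) : E := vadd N x (vopp N y).
Definition vdist (x y : E) : R := vnorm N (vsub x y).

Definition is_open (S : E -> Prop) : Prop :=
  forall x, S x -> exists r, 0 < r /\ forall y, vdist y x < r -> S y.
Definition is_closed (S : E -> Prop) : Prop := is_open (fun x => ~ S x).

Definition is_compact (K : E -> Prop) : Prop :=
  forall (Idx : Type) (O : Idx -> E -> Prop),
    (forall i, is_open (O i)) ->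
    (forall x, K x -> exists i, O i x) ->
    exists l : list Idx, forall x, K x -> exists i, In i l /\ O i x.

Definition is_convex_set (S : E -> Prop) : Prop :=
  forall x y lam, S x -> S y -> 0 <= lam <= 1 ->
    S (vadd N (vscal N lam x) (vscal N (1 - lam) y)).

Definition is_cone (C : E -> Prop) : Prop :=
  forall x lam, C x -> 0 < lam -> C (vscal N lam x).
Definition is_proper_cone (C : E -> Prop) : Prop :=
  is_cone C /\
  (forall x y, C x -> C y -> C (vadd N x y)) /\
  (forall x, (C x /\ C (vopp N x)) <-> x = vzero N).

Definition cle (C : E -> Prop) (x y : E) : Prop := C (vsub y x).

Definition has_nonempty_interior (S : E -> Prop) : Prop :=
  exists x r, 0 < r /\ forall y, vdist y x < r -> S y.

Definition is_complete : Prop :=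
  forall u : nat -> E,
    (forall eps, 0 < eps -> exists M, forall n m, (M <= n)%nat -> (M <= m)%nat ->
        vdist (u n) (u m) < eps) ->
    exists l, forall eps, 0 < eps -> exists M, forall n, (M <= n)%nat ->
        vdist (u n) l < eps.

Definition is_distance_set (C : E -> Prop) : Prop :=
  forall x, exists y, C y /\ forall z, C z -> vdist x y <= vdist x z.

Definition is_linear_functional (l : E -> R) : Prop :=
  (forall x y, l (vadd N x y) = l x + l y) /\
  (forall a x, l (vscal N a x) = a * l x).
Definition is_continuous_functional (l : E -> R) : Prop :=
  forall x eps, 0 < eps -> exists delta, 0 < delta /\
    forall y, vdist y x < delta -> Rabs (l y - l x) < eps.
Definition in_dual_cone (C : E -> Prop) (l : E -> R) : Prop :=
  is_linear_functional l /\ is_continuous_functional l /\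
  forall x, C x -> 0 <= l x.

Definition quasi_monotone_increasing (C : E -> Prop) (D : E -> Prop)
  (g : E -> E) : Prop :=
  forall x y l, D x -> D y -> in_dual_cone C l ->
    cle C x y -> l x = l y -> l (g x) <= l (g y).

Definition convex_map (C : E -> Prop) (D : E -> Prop) (g : E -> E) : Prop :=
  is_convex_set D /\
  forall x y lam, D x -> D y -> 0 <= lam <= 1 ->
    cle C (g (vadd N (vscal N lam x) (vscal N (1 - lam) y)))
          (vadd N (vscal N lam (g x)) (vscal N (1 - lam) (g y))).

Definition has_derivative_within (D : R -> Prop) (x : R -> E) (t : R) (v : E)
  : Prop :=
  forall eps, 0 < eps -> exists delta, 0 < delta /\
    forall s, D s -> s <> t -> Rabs (s - t) < delta ->
      vdist (vscal N (/ (s - t)) (vsub (x s) (x t))) v < eps.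

End NS.

(* extended positive reals: None stands for +infinity *)
Definition ext_pos (T : option R) : Prop :=
  match T with Some a => 0 < a | None => True end.
Definition ext_le (a b : option R) : Prop :=
  match a, b with
  | _, None => True
  | None, Some _ => False
  | Some a, Some b => a <= b
  end.
Definition in_Ico0 (T : option R) (t : R) : Prop :=
  0 <= t /\ match T with Some a => t < a | None => True end.

Section F.
Context {E : Type} (N : NormedSpace E).

Definition continuous_on_IxU (I : R -> Prop) (U : E -> Prop)
  (f : R -> E -> E) : Prop :=
  forall t x, I t -> U x -> forall eps, 0 < eps -> exists delta, 0 < delta /\
    forall s y, I s -> U y -> Rabs (s - t) < delta -> vdist N y x < delta ->
      vdist N (f s y) (f t x) < eps.

Definition locally_lipschitz (I : R -> Prop) (U : E -> Prop)
  (f : R -> E -> E) : Prop :=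
  forall K : E -> Prop, is_compact N K -> (forall x, K x -> U x) ->
  forall t, I t -> exists L, forall tau x1 x2, 0 <= tau <= t ->
    K x1 -> K x2 -> x1 <> x2 ->
    vnorm N (vsub N (f tau x2) (f tau x1)) / vnorm N (vsub N x2 x1) <= L.
End F.

(* Put y = lam x1 + (1 - lam) x2 and d = y - x3; we must show d(t) in C.
   The failure of d in C is measured by a "gap functional" P (record
   [gap_functional]): a sublinear, nonnegative, Lipschitz function vanishing
   exactly on C, which at every d outside C admits an approximately supporting
   linear functional l <= P with l q = 0 at a point q of C close to d.
   Such a P exists under each of the three alternative hypotheses: the gauge
   of C with respect to an interior point, or the distance to C, whose
   supporting functionals are obtained by Hahn-Banach at an Ekeland point
   (complete case) or at a nearest point (distance-set case).
   Then psi = P o d is continuous with psi 0 = 0.  Near a zero of psi, either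
   the difference quotients of f between y and the points x3 + q stay bounded
   -- then convexity and quasi-monotonicity give the Dini estimate
   psi' <= K psi and a Gronwall argument keeps psi at 0 -- or they blow up
   along a sequence converging to that zero, contradicting the local Lipschitz
   property on the compact set formed by the sequence and its limit.
   A continuous induction on [0, t] concludes. *)

From Stdlib Require Import Reals List.
From Stdlib Require Import Lra Lia Classical ClassicalEpsilon FunctionalExtensionality PropExtensionality.
Open Scope R_scope.

Arguments vadd_assoc {E} _ _ _ _.
Arguments vadd_comm {E} _ _ _.
Arguments vadd_0 {E} _ _.
Arguments vadd_opp {E} _ _.
Arguments vscal_assoc {E} _ _ _ _.
Arguments vscal_1 {E} _ _.
Arguments vscal_distr_v {E} _ _ _ _.
Arguments vscal_distr_s {E} _ _ _ _.
Arguments vnorm_eq0 {E} _ _ _.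
Arguments vnorm_scal {E} _ _ _.
Arguments vnorm_triangle {E} _ _ _.

(* A reflexive decision procedure for identities between linear expressions
   in a vector space: both sides are reified as formal linear expressions
   over a list of atoms and compared coefficientwise with [ring]. *)
Section VectorExpressions.
Context {E : Type} (N : NormedSpace E).

Inductive vexp : Type :=
| VAtom (n : nat) | VZero | VAdd (a b : vexp) | VOpp (a : vexp) | VScal (r : R) (a : vexp).

Fixpoint veval (l : list E) (e : vexp) : E :=
  match e with
  | VAtom n => nth n l (vzero N)
  | VZero => vzero N
  | VAdd a b => vadd N (veval l a) (veval l b)
  | VOpp a => vopp N (veval l a)
  | VScal r a => vscal N r (veval l a)
  end.

Fixpoint vcoef (e : vexp) (i : nat) : R :=
  match e with
  | VAtom n => if Nat.eqb n i then 1 else 0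
  | VZero => 0
  | VAdd a b => vcoef a i + vcoef b i
  | VOpp a => - vcoef a i
  | VScal r a => r * vcoef a i
  end.

Lemma vadd_cancel x y : vadd N x y = x -> y = vzero N.
Proof.
  intro H. assert (H2 : vadd N (vopp N x) (vadd N x y) = vadd N (vopp N x) x) by now rewrite H.
  rewrite vadd_assoc, (vadd_comm N (vopp N x) x), vadd_opp in H2.
  rewrite (vadd_comm N (vzero N) y), vadd_0 in H2. exact H2.
Qed.

Lemma vadd_0l x : vadd N (vzero N) x = x.
Proof. rewrite vadd_comm; apply vadd_0. Qed.

Lemma vscal_0 x : vscal N 0 x = vzero N.
Proof. apply (vadd_cancel (vscal N 0 x)). rewrite <- vscal_distr_s. f_equal; ring. Qed.

Lemma vscal_0v a : vscal N a (vzero N) = vzero N.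
Proof. apply (vadd_cancel (vscal N a (vzero N))). rewrite <- vscal_distr_v, vadd_0. auto. Qed.

Lemma vopp_unique x y : vadd N x y = vzero N -> y = vopp N x.
Proof.
  intro H. assert (H2 : vadd N (vopp N x) (vadd N x y) = vadd N (vopp N x) (vzero N)) by now rewrite H.
  rewrite vadd_assoc, (vadd_comm N (vopp N x) x), vadd_opp, vadd_0l, vadd_0 in H2. exact H2.
Qed.

Lemma vopp_scal x : vopp N x = vscal N (-1) x.
Proof.
  symmetry; apply vopp_unique. rewrite <- (vscal_1 N x) at 1. rewrite <- vscal_distr_s.
  replace (1 + -1) with 0 by ring. apply vscal_0.
Qed.

Fixpoint vlc (l : list E) (c : nat -> R) : E :=
  match l with
  | nil => vzero N
  | v :: l' => vadd N (vscal N (c O) v) (vlc l' (fun i => c (S i)))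
  end.

Lemma vlc_ext l c c' : (forall i, (i < length l)%nat -> c i = c' i) -> vlc l c = vlc l c'.
Proof.
  revert c c'; induction l as [|v l IH]; intros c c' H; simpl; auto.
  rewrite (H O) by (simpl; lia). f_equal. apply IH. intros i Hi. apply H. simpl; lia.
Qed.

Lemma vlc_add l c c' : vlc l (fun i => c i + c' i) = vadd N (vlc l c) (vlc l c').
Proof.
  revert c c'; induction l as [|v l IH]; intros c c'; simpl.
  - rewrite vadd_0; auto.
  - rewrite IH, vscal_distr_s, <- !vadd_assoc. f_equal. rewrite !vadd_assoc. f_equal. apply vadd_comm.
Qed.

Lemma vlc_scal l r c : vlc l (fun i => r * c i) = vscal N r (vlc l c).
Proof.
  revert c; induction l as [|v l IH]; intros c; simpl.
  - rewrite vscal_0v; auto.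
  - rewrite IH, vscal_distr_v, vscal_assoc. auto.
Qed.

Lemma vlc_zero l : vlc l (fun _ => 0) = vzero N.
Proof. induction l; simpl; auto. rewrite IHl, vscal_0, vadd_0; auto. Qed.

Lemma vlc_atom l n : vlc l (fun i => if Nat.eqb n i then 1 else 0) = nth n l (vzero N).
Proof.
  revert n; induction l as [|v l IH]; intros n; simpl.
  - destruct n; auto.
  - destruct n as [|n]; simpl.
    + rewrite vscal_1, vlc_zero, vadd_0. auto.
    + rewrite vscal_0, vadd_0l. apply IH.
Qed.

Lemma veval_lc l e : veval l e = vlc l (vcoef e).
Proof.
  induction e; simpl.
  - rewrite vlc_atom; auto.
  - rewrite vlc_zero; auto.
  - rewrite IHe1, IHe2, <- vlc_add; auto.
  - rewrite IHe, vopp_scal, <- vlc_scal. apply vlc_ext; intros; ring.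
  - rewrite IHe, <- vlc_scal; auto.
Qed.

Fixpoint coefs_eq (k : nat) (e1 e2 : vexp) : Prop :=
  match k with O => True | S k => coefs_eq k e1 e2 /\ vcoef e1 k = vcoef e2 k end.

Lemma coefs_eq_spec k e1 e2 : coefs_eq k e1 e2 -> forall i, (i < k)%nat -> vcoef e1 i = vcoef e2 i.
Proof.
  induction k; simpl; intros H i Hi. lia. destruct H as [H1 H2].
  destruct (Nat.eq_dec i k). subst; auto. apply IHk; auto; lia.
Qed.

Lemma vexp_sound l e1 e2 : coefs_eq (length l) e1 e2 -> veval l e1 = veval l e2.
Proof. intro H. rewrite !veval_lc. apply vlc_ext, coefs_eq_spec; auto. Qed.

End VectorExpressions.

Ltac find_idx x l :=
  match l with
  | x :: _ => constr:(O)
  | _ :: ?t => let n := find_idx x t in constr:(S n)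
  end.

Ltac vreify N l t :=
  lazymatch t with
  | vadd N ?a ?b => let ra := vreify N l a in let rb := vreify N l b in constr:(VAdd ra rb)
  | vsub N ?a ?b => let ra := vreify N l a in let rb := vreify N l b in constr:(VAdd ra (VOpp rb))
  | vopp N ?a => let ra := vreify N l a in constr:(VOpp ra)
  | vscal N ?r ?a => let ra := vreify N l a in constr:(VScal r ra)
  | vzero N => constr:(VZero)
  | _ => let n := find_idx t l in constr:(VAtom n)
  end.

Ltac vec_eq_gen N l tac :=
  lazymatch goal with
  | |- ?lhs = ?rhs =>
    let a := vreify N l lhs in let b := vreify N l rhs in
    change (veval N l a = veval N l b); apply vexp_sound; simpl; repeat split; tac
  end.
Tactic Notation "vec_eq" constr(N) constr(l) := vec_eq_gen N l ltac:(ring).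
Tactic Notation "vec_eq" constr(N) constr(l) "by" tactic(t) := vec_eq_gen N l t.

Lemma Rabs_m1 : Rabs (-1) = 1.
Proof. rewrite Rabs_left; lra. Qed.

Section NormFacts.
Context {E : Type} (N : NormedSpace E).

Lemma vnorm_0 : vnorm N (vzero N) = 0.
Proof. rewrite <- (vscal_0 N (vzero N)), vnorm_scal, Rabs_R0; ring. Qed.

Lemma vnorm_nonneg x : 0 <= vnorm N x.
Proof.
  assert (H := vnorm_triangle N x (vopp N x)). rewrite vadd_opp, vnorm_0 in H.
  rewrite vopp_scal, vnorm_scal, Rabs_m1 in H. lra.
Qed.

Lemma vnorm_opp x : vnorm N (vopp N x) = vnorm N x.
Proof. rewrite vopp_scal, vnorm_scal, Rabs_m1; ring. Qed.

Lemma vdist_sym x y : vdist N x y = vdist N y x.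
Proof. unfold vdist. rewrite <- vnorm_opp. f_equal. vec_eq N (x :: y :: nil). Qed.

Lemma vdist_tri x y z : vdist N x z <= vdist N x y + vdist N y z.
Proof.
  unfold vdist. replace (vsub N x z) with (vadd N (vsub N x y) (vsub N y z)) by vec_eq N (x::y::z::nil).
  apply vnorm_triangle.
Qed.

Lemma vdist_nonneg x y : 0 <= vdist N x y.
Proof. apply vnorm_nonneg. Qed.

Lemma vdist_refl x : vdist N x x = 0.
Proof. unfold vdist. replace (vsub N x x) with (vzero N) by vec_eq N (x::nil). apply vnorm_0. Qed.

Lemma vdist_eq0 x y : vdist N x y = 0 -> x = y.
Proof.
  unfold vdist; intro H. apply vnorm_eq0 in H.
  replace x with (vadd N (vsub N x y) y) by vec_eq N (x::y::nil). rewrite H. apply vadd_0l.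
Qed.

End NormFacts.

Lemma pred_ext {T} (A B : T -> Prop) : (forall t, A t <-> B t) -> A = B.
Proof. intro H. apply functional_extensionality; intro t. apply propositional_extensionality; auto. Qed.

(* Zorn's lemma, by the Bourbaki-Witt tower argument: a map [g] sending
   every chain to a strict upper bound cannot exist, since the smallest
   family of sets closed under "add g S" and nested unions is itself nested,
   and its union S would contain g S. *)
Section Zorn.
Variable T : Type.
Variable le : T -> T -> Prop.
Hypothesis le_refl : forall x, le x x.
Hypothesis le_trans : forall x y z, le x y -> le y z -> le x z.

Definition chain (c : T -> Prop) := forall a b, c a -> c b -> le a b \/ le b a.

Definition incl (A B : T -> Prop) := forall t, A t -> B t.
Definition family_union (F : (T -> Prop) -> Prop) : T -> Prop := fun t => exists S, F S /\ S t.
Definition nested (F : (T -> Prop) -> Prop) := forall A B, F A -> F B -> incl A B \/ incl B A.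

Lemma incl_antisym A B : incl A B -> incl B A -> A = B.
Proof. intros H1 H2. apply pred_ext; split; auto. Qed.

Section Tower.
Variable g : (T -> Prop) -> T.
Hypothesis g_strict : forall c, chain c -> forall a, c a -> le a (g c) /\ ~ le (g c) a.

Definition succ (S : T -> Prop) : T -> Prop := fun t => S t \/ t = g S.
Definition tower_closed (M : (T -> Prop) -> Prop) :=
  M (fun _ => False) /\ (forall S, M S -> M (succ S)) /\
  (forall F, (forall S, F S -> M S) -> nested F -> M (family_union F)).
Definition in_tower S := forall M, tower_closed M -> M S.

Lemma incl_succ S : incl S (succ S).
Proof. intros t Ht; left; auto. Qed.

Lemma tower_is_closed : tower_closed in_tower.
Proof.
  split; [|split].
  - intros M HM; apply HM.
  - intros S HS M HM. apply HM, HS; auto.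
  - intros F HF Hch M HM. apply HM; auto. intros S HS. apply HF; auto.
Qed.

Lemma tower_ind (M : (T -> Prop) -> Prop) :
  tower_closed (fun S => in_tower S /\ M S) -> forall S, in_tower S -> M S.
Proof. intros HM S HS. apply (HS _ HM). Qed.

Definition extreme x := in_tower x /\ forall y, in_tower y -> incl y x -> ~ incl x y -> incl (succ y) x.

Lemma extreme_compare x : extreme x -> forall y, in_tower y -> incl y x \/ incl (succ x) y.
Proof.
  intros [Wx Ex]. destruct tower_is_closed as [W0 [Wf WU]].
  apply (tower_ind (fun y => incl y x \/ incl (succ x) y)). split; [|split].
  - split; auto. left; intros t [].
  - intros S [WS [HS|HS]]; split; auto.
    + destruct (classic (incl x S)) as [Hxs|Hxs].
      * rewrite (incl_antisym _ _ HS Hxs). right; intros t Ht; exact Ht.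
      * left. apply Ex; auto.
    + right. intros t Ht. apply incl_succ, HS, Ht.
  - intros F HF Hch. split. apply WU; auto. intros S HS; apply HF; auto.
    destruct (classic (forall S, F S -> incl S x)) as [Hall|Hall].
    + left. intros t [S [HS Ht]]. apply (Hall S HS t Ht).
    + right. apply not_all_ex_not in Hall. destruct Hall as [S HS].
      apply imply_to_and in HS. destruct HS as [HS1 HS2].
      destruct (HF S HS1) as [_ [H|H]]. contradiction. intros t Ht. exists S; split; auto.
Qed.

Lemma tower_extreme x : in_tower x -> extreme x.
Proof.
  destruct tower_is_closed as [W0 [Wf WU]].
  revert x; apply tower_ind. split; [|split].
  - split; auto. split; auto. intros y Wy Hy Hn. exfalso. apply Hn. intros t [].
  - intros x [Wx Hx]. split; auto. split; auto. intros y Wy Hy Hn.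
    destruct (extreme_compare x Hx y Wy) as [Hyx|Hfy]; [|contradiction].
    destruct (classic (incl x y)) as [Hxy|Hxy].
    + rewrite (incl_antisym _ _ Hxy Hyx). intros t Ht; exact Ht.
    + destruct Hx as [_ Hx]. intros t Ht. apply incl_succ. apply (Hx y Wy Hyx Hxy t Ht).
  - intros F HF Hch. assert (Wm : in_tower (family_union F)) by (apply WU; auto; intros S HS; apply HF; auto).
    split; auto. split; auto. intros y Wy Hy Hn.
    destruct (classic (exists S, F S /\ ~ incl (succ S) y)) as [[S [HS HSn]]|Hno].
    + destruct (HF S HS) as [WS ES].
      destruct (extreme_compare S ES y Wy) as [HyS|HfS]; [|contradiction].
      destruct (classic (incl S y)) as [HSy|HSy].
      * rewrite (incl_antisym _ _ HSy HyS) in ES.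
        destruct (extreme_compare y ES (family_union F) Wm) as [Hm|Hm]. contradiction. exact Hm.
      * destruct ES as [_ ES]. intros t Ht. exists S. split; auto. apply (ES y Wy HyS HSy t Ht).
    + exfalso. apply Hn. intros t [S [HS Ht]].
      destruct (classic (incl (succ S) y)) as [H|H]. apply H, incl_succ, Ht. exfalso; apply Hno; eauto.
Qed.

Lemma tower_nested : nested in_tower.
Proof.
  intros A B WA WB. destruct (extreme_compare A (tower_extreme A WA) B WB) as [H|H].
  right; auto. left. intros t Ht; apply H, incl_succ, Ht.
Qed.

Lemma tower_chain S : in_tower S -> chain S.
Proof.
  destruct tower_is_closed as [W0 [Wf WU]].
  revert S; apply tower_ind. split; [|split].
  - split; auto. intros a b [].
  - intros S [WS HS]. split; auto. intros a b [Ha|Ha] [Hb|Hb].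
    + apply HS; auto.
    + subst. left. apply (g_strict S HS a Ha).
    + subst. right. apply (g_strict S HS b Hb).
    + subst. left. apply le_refl.
  - intros F HF Hch. split. apply WU; auto. intros S HS; apply HF; auto.
    intros a b [A [HA Ha]] [B [HB Hb]]. destruct (Hch A B HA HB) as [H|H].
    + apply (proj2 (HF B HB)); auto.
    + apply (proj2 (HF A HA)); auto.
Qed.

(* the union of the whole tower contains its own strict upper bound *)
Lemma no_strict_bound_map : False.
Proof.
  destruct tower_is_closed as [W0 [Wf WU]].
  set (m := family_union in_tower).
  assert (Wm : in_tower m) by (apply WU; auto; apply tower_nested).
  assert (Hgm : m (g m)) by (exists (succ m); split; [apply Wf; auto|right; auto]).
  destruct (g_strict m (tower_chain m Wm) (g m) Hgm) as [_ H]. apply H, le_refl.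
Qed.

End Tower.

Theorem zorn :
  (forall c, chain c -> exists u, forall a, c a -> le a u) ->
  exists m, forall x, le m x -> le x m.
Proof.
  intro ub. apply NNPP; intro Hno.
  assert (Hs : forall m, exists x, le m x /\ ~ le x m).
  { intro m. apply NNPP; intro H1. apply Hno. exists m. intros x Hx.
    apply NNPP; intro H2. apply H1. exists x; auto. }
  assert (inh : inhabited T).
  { destruct (ub (fun _ => False)) as [u _]. intros a b []. exact (inhabits u). }
  set (g := fun c : T -> Prop => epsilon inh (fun x => forall a, c a -> le a x /\ ~ le x a)).
  apply (no_strict_bound_map g). intros c Hc. unfold g.
  apply (epsilon_spec inh (fun x => forall a, c a -> le a x /\ ~ le x a)).
  destruct (ub c Hc) as [u Hu]. destruct (Hs u) as [x [H1 H2]]. exists x. intros a Ha.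
  split. eapply le_trans; eauto. intro H3. apply H2. eapply le_trans; eauto.
Qed.

End Zorn.

(* Partial
   extensions are ordered by extension; chains have upper bounds (unions), a
   maximal one exists by Zorn, and it is total since a proper partial
   extension can always be extended by one dimension. *)
Section HahnBanach.
Context {E : Type} (N : NormedSpace E) (p : E -> R).
Hypothesis p_sub : forall x y, p (vadd N x y) <= p x + p y.
Hypothesis p_hom : forall a x, 0 < a -> p (vscal N a x) = a * p x.
Variable x0 : E.

Lemma sublinear_0 : p (vzero N) = 0.
Proof. assert (H := p_hom 2 (vzero N) ltac:(lra)). rewrite vscal_0v in H. lra. Qed.

Lemma sublinear_scal_ge a x : a * p x <= p (vscal N a x).
Proof.
  destruct (Rlt_or_le 0 a) as [Ha|Ha]. rewrite p_hom; lra.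
  destruct (Req_dec a 0) as [H0|H0].
  - subst. rewrite vscal_0, sublinear_0. lra.
  - assert (H := p_sub (vscal N a x) (vscal N (-a) x)).
    replace (vadd N (vscal N a x) (vscal N (- a) x)) with (vzero N) in H by vec_eq N (x::nil).
    rewrite sublinear_0, (p_hom (-a)) in H by lra. nra.
Qed.

Record partial_ext := mkPE {
  pe_dom : E -> Prop; pe_val : E -> R;
  pe_dom0 : pe_dom (vzero N);
  pe_dom_add : forall x y, pe_dom x -> pe_dom y -> pe_dom (vadd N x y);
  pe_dom_scal : forall a x, pe_dom x -> pe_dom (vscal N a x);
  pe_val_add : forall x y, pe_dom x -> pe_dom y -> pe_val (vadd N x y) = pe_val x + pe_val y;
  pe_val_scal : forall a x, pe_dom x -> pe_val (vscal N a x) = a * pe_val x;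
  pe_val_le : forall x, pe_dom x -> pe_val x <= p x;
  pe_dom_x0 : pe_dom x0;
  pe_val_x0 : pe_val x0 = p x0 }.

Definition pe_le (e1 e2 : partial_ext) :=
  (forall x, pe_dom e1 x -> pe_dom e2 x) /\ (forall x, pe_dom e1 x -> pe_val e1 x = pe_val e2 x).

Lemma pe_le_refl e : pe_le e e.
Proof. split; auto. Qed.

Lemma pe_le_trans e1 e2 e3 : pe_le e1 e2 -> pe_le e2 e3 -> pe_le e1 e3.
Proof. intros [A B] [C D]. split; auto. intros x Hx. rewrite B, D; auto. Qed.

(* the initial extension t x0 |-> t p x0 on the line through x0 *)
Lemma line_val_wd t t' : vscal N t x0 = vscal N t' x0 -> t * p x0 = t' * p x0.
Proof.
  intro H. destruct (Req_dec t t') as [->|Hne]; auto.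
  assert (Hx0 : x0 = vzero N).
  { replace x0 with (vscal N (/ (t - t')) (vsub N (vscal N t x0) (vscal N t' x0))).
    rewrite H. replace (vsub N (vscal N t' x0) (vscal N t' x0)) with (vzero N) by vec_eq N (x0::nil).
    apply vscal_0v. vec_eq N (x0::nil) by (field; lra). }
  rewrite Hx0, sublinear_0. ring.
Qed.

Definition line_val (x : E) : R :=
  epsilon (inhabits 0) (fun t => x = vscal N t x0) * p x0.

Lemma line_val_spec t : line_val (vscal N t x0) = t * p x0.
Proof.
  unfold line_val. set (P := fun t' => vscal N t x0 = vscal N t' x0).
  assert (HP : P (epsilon (inhabits 0) P)) by (apply epsilon_spec; exists t; reflexivity).
  symmetry. apply line_val_wd. exact HP.
Qed.

Definition line_ext : partial_ext.
Proof.
  refine (mkPE (fun x => exists t, x = vscal N t x0) line_val _ _ _ _ _ _ _ _).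
  - exists 0. symmetry; apply vscal_0.
  - intros x y [t ->] [s ->]. exists (t + s). vec_eq N (x0::nil).
  - intros a x [t ->]. exists (a * t). vec_eq N (x0::nil).
  - intros x y [t ->] [s ->]. replace (vadd N (vscal N t x0) (vscal N s x0)) with (vscal N (t+s) x0) by vec_eq N (x0::nil).
    rewrite !line_val_spec. ring.
  - intros a x [t ->]. replace (vscal N a (vscal N t x0)) with (vscal N (a*t) x0) by vec_eq N (x0::nil).
    rewrite !line_val_spec. ring.
  - intros x [t ->]. rewrite line_val_spec. apply sublinear_scal_ge.
  - exists 1. symmetry; apply vscal_1.
  - replace x0 with (vscal N 1 x0) at 1 by apply vscal_1. rewrite line_val_spec. ring.
Defined.

Lemma line_ext_le e : pe_le line_ext e.
Proof.
  split.
  - intros x [t ->]. apply pe_dom_scal, pe_dom_x0.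
  - intros x [t ->]. simpl. rewrite line_val_spec, pe_val_scal, pe_val_x0; auto. apply pe_dom_x0.
Qed.

Lemma pe_chain_ub (c : partial_ext -> Prop) : chain partial_ext pe_le c ->
  exists u, forall a, c a -> pe_le a u.
Proof.
  intro Hc. set (c' := fun e => c e \/ e = line_ext).
  assert (Hc' : chain partial_ext pe_le c').
  { intros a b [Ha| ->] [Hb| ->]; auto. right; apply line_ext_le. left; apply line_ext_le. left; apply pe_le_refl. }
  set (inh := inhabits line_ext).
  set (Su := fun x => exists e, c' e /\ pe_dom e x).
  set (gu := fun x => pe_val (epsilon inh (fun e => c' e /\ pe_dom e x)) x).
  assert (gu_spec : forall e x, c' e -> pe_dom e x -> gu x = pe_val e x).
  { intros e x He Hx. unfold gu. set (P := fun e => c' e /\ pe_dom e x).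
    assert (HP : P (epsilon inh P)) by (apply epsilon_spec; exists e; split; auto).
    destruct HP as [H1 H2]. destruct (Hc' _ _ H1 He) as [[A B]|[A B]].
    - apply B; auto.
    - symmetry; apply B; auto. }
  assert (two : forall x y, Su x -> Su y -> exists e, c' e /\ pe_dom e x /\ pe_dom e y).
  { intros x y [e1 [H1 Hx]] [e2 [H2 Hy]]. destruct (Hc' _ _ H1 H2) as [[A _]|[A _]].
    exists e2; auto. exists e1; auto. }
  unshelve eexists (mkPE Su gu _ _ _ _ _ _ _ _).
  - exists line_ext. split. right; auto. apply pe_dom0.
  - intros x y Hx Hy. destruct (two x y Hx Hy) as [e [He [A B]]]. exists e. split; auto. apply pe_dom_add; auto.
  - intros a x [e [He Hx]]. exists e. split; auto. apply pe_dom_scal; auto.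
  - intros x y Hx Hy. destruct (two x y Hx Hy) as [e [He [A B]]].
    rewrite !(gu_spec e); auto. apply pe_val_add; auto. apply pe_dom_add; auto.
  - intros a x [e [He Hx]]. rewrite !(gu_spec e); auto. apply pe_val_scal; auto. apply pe_dom_scal; auto.
  - intros x [e [He Hx]]. rewrite (gu_spec e); auto. apply pe_val_le; auto.
  - exists line_ext. split. right; auto. apply pe_dom_x0.
  - rewrite (gu_spec line_ext). apply pe_val_x0. right; auto. apply pe_dom_x0.
  - intros a Ha. split.
    + intros x Hx. exists a. split; auto. left; auto.
    + intros x Hx. simpl. symmetry. apply gu_spec; auto. left; auto.
Qed.

Section OneStep.
Variables (e : partial_ext) (z : E).
Hypothesis z_out : ~ pe_dom e z.

Lemma extension_value : exists c,
  (forall x, pe_dom e x -> pe_val e x - p (vsub N x z) <= c) /\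
  (forall y, pe_dom e y -> c <= p (vadd N y z) - pe_val e y).
Proof.
  set (A := fun r => exists x, pe_dom e x /\ r = pe_val e x - p (vsub N x z)).
  assert (key : forall x y, pe_dom e x -> pe_dom e y -> pe_val e x - p (vsub N x z) <= p (vadd N y z) - pe_val e y).
  { intros x y Hx Hy. assert (H1 := pe_val_add e x y Hx Hy). assert (H2 := pe_val_le e _ (pe_dom_add e x y Hx Hy)).
    assert (H3 := p_sub (vsub N x z) (vadd N y z)).
    replace (vadd N (vsub N x z) (vadd N y z)) with (vadd N x y) in H3 by vec_eq N (x::y::z::nil). lra. }
  assert (Hb : bound A).
  { exists (p (vadd N (vzero N) z) - pe_val e (vzero N)). intros r [x [Hx ->]]. apply key; auto. apply pe_dom0. }
  assert (Hne : exists r, A r) by (eexists; exists (vzero N); split; [apply pe_dom0|reflexivity]).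
  destruct (completeness A Hb Hne) as [c [Hc1 Hc2]]. exists c. split.
  - intros x Hx. apply Hc1. exists x; auto.
  - intros y Hy. apply Hc2. intros r [x [Hx ->]]. apply key; auto.
Qed.

Lemma extension_decomp_unique x t x' t' : pe_dom e x -> pe_dom e x' ->
  vadd N x (vscal N t z) = vadd N x' (vscal N t' z) -> x = x' /\ t = t'.
Proof.
  intros Hx Hx' H. destruct (Req_dec t t') as [<-|Hne'].
  - split; auto. replace x with (vsub N (vadd N x (vscal N t z)) (vscal N t z)) by vec_eq N (x::z::nil).
    rewrite H. vec_eq N (x'::z::nil).
  - exfalso. apply z_out. replace z with (vscal N (/ (t - t')) (vsub N x' x)).
    apply pe_dom_scal. apply pe_dom_add; auto. rewrite vopp_scal. apply pe_dom_scal; auto.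
    assert (Hd : vsub N x' x = vscal N (t - t') z).
    { replace (vsub N x' x) with (vsub N (vadd N x' (vscal N t' z)) (vadd N x (vscal N t' z))) by vec_eq N (x::x'::z::nil).
      rewrite <- H. vec_eq N (x::z::nil). }
    rewrite Hd. vec_eq N (z::nil) by (field; lra).
Qed.

Lemma extension_dominated c x t :
  (forall x, pe_dom e x -> pe_val e x - p (vsub N x z) <= c) ->
  (forall y, pe_dom e y -> c <= p (vadd N y z) - pe_val e y) ->
  pe_dom e x -> pe_val e x + t * c <= p (vadd N x (vscal N t z)).
Proof.
  intros Hlo Hhi Hx. destruct (Rtotal_order t 0) as [Hn|[H0|Hp]].
  - set (s := - t). assert (Hs : 0 < s) by (unfold s; lra).
    assert (H := Hlo (vscal N (/ s) x) (pe_dom_scal e _ _ Hx)). rewrite pe_val_scal in H; auto.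
    replace (vadd N x (vscal N t z)) with (vscal N s (vsub N (vscal N (/ s) x) z)) by (unfold s; vec_eq N (x::z::nil) by (field; lra)).
    rewrite p_hom; auto. apply Rmult_le_compat_l with (r := s) in H; [|lra].
    replace (s * (/ s * pe_val e x - p (vsub N (vscal N (/ s) x) z))) with (pe_val e x - s * p (vsub N (vscal N (/ s) x) z)) in H by (field; lra).
    unfold s in *. nra.
  - subst. replace (vadd N x (vscal N 0 z)) with x by vec_eq N (x::z::nil). rewrite Rmult_0_l, Rplus_0_r. apply pe_val_le; auto.
  - assert (H := Hhi (vscal N (/ t) x) (pe_dom_scal e _ _ Hx)). rewrite pe_val_scal in H; auto.
    replace (vadd N x (vscal N t z)) with (vscal N t (vadd N (vscal N (/ t) x) z)) by (vec_eq N (x::z::nil) by (field; lra)).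
    rewrite p_hom; auto. apply Rmult_le_compat_l with (r := t) in H; [|lra].
    replace (t * (p (vadd N (vscal N (/ t) x) z) - / t * pe_val e x)) with (t * p (vadd N (vscal N (/ t) x) z) - pe_val e x) in H by (field; lra).
    lra.
Qed.

Lemma pe_extend : exists e', pe_le e e' /\ pe_dom e' z.
Proof.
  destruct extension_value as [c [Hlo Hhi]].
  set (S' := fun w => exists x t, pe_dom e x /\ w = vadd N x (vscal N t z)).
  set (inhXT := inhabits (vzero N, 0)).
  set (g' := fun w => let xt := epsilon inhXT (fun xt => pe_dom e (fst xt) /\ w = vadd N (fst xt) (vscal N (snd xt) z)) in
                      pe_val e (fst xt) + snd xt * c).
  assert (g'_spec : forall x t, pe_dom e x -> g' (vadd N x (vscal N t z)) = pe_val e x + t * c).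
  { intros x t Hx. unfold g'. set (P := fun xt : E * R => pe_dom e (fst xt) /\ vadd N x (vscal N t z) = vadd N (fst xt) (vscal N (snd xt) z)).
    assert (HP : P (epsilon inhXT P)) by (apply epsilon_spec; exists (x, t); split; auto).
    destruct HP as [H1 H2]. destruct (extension_decomp_unique _ _ _ _ Hx H1 H2) as [E1 E2]. simpl. rewrite <- E1, <- E2. reflexivity. }
  unshelve eexists (mkPE S' g' _ _ _ _ _ _ _ _).
  - exists (vzero N), 0. split. apply pe_dom0. vec_eq N (z::nil).
  - intros w w' [x [t [Hx ->]]] [x' [t' [Hx' ->]]]. exists (vadd N x x'), (t + t'). split. apply pe_dom_add; auto. vec_eq N (x::x'::z::nil).
  - intros a w [x [t [Hx ->]]]. exists (vscal N a x), (a * t). split. apply pe_dom_scal; auto. vec_eq N (x::z::nil).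
  - intros w w' [x [t [Hx ->]]] [x' [t' [Hx' ->]]].
    replace (vadd N (vadd N x (vscal N t z)) (vadd N x' (vscal N t' z))) with (vadd N (vadd N x x') (vscal N (t+t') z)) by vec_eq N (x::x'::z::nil).
    rewrite !g'_spec; auto. rewrite pe_val_add; auto. ring. apply pe_dom_add; auto.
  - intros a w [x [t [Hx ->]]].
    replace (vscal N a (vadd N x (vscal N t z))) with (vadd N (vscal N a x) (vscal N (a*t) z)) by vec_eq N (x::z::nil).
    rewrite !g'_spec; auto. rewrite pe_val_scal; auto. ring. apply pe_dom_scal; auto.
  - intros w [x [t [Hx ->]]]. rewrite g'_spec; auto. apply extension_dominated; auto.
  - exists x0, 0. split. apply pe_dom_x0. vec_eq N (x0::z::nil).
  - replace x0 with (vadd N x0 (vscal N 0 z)) at 1 by vec_eq N (x0::z::nil). rewrite g'_spec. rewrite pe_val_x0; ring. apply pe_dom_x0.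
  - split. split.
    + intros x Hx. exists x, 0. split; auto. vec_eq N (x::z::nil).
    + intros x Hx. simpl. replace x with (vadd N x (vscal N 0 z)) at 2 by vec_eq N (x::z::nil). rewrite g'_spec; auto. ring.
    + exists (vzero N), 1. split. apply pe_dom0. vec_eq N (z::nil).
Qed.

End OneStep.

Theorem hahn_banach : exists l : E -> R,
  is_linear_functional N l /\ (forall x, l x <= p x) /\ l x0 = p x0.
Proof.
  destruct (zorn partial_ext pe_le pe_le_refl pe_le_trans pe_chain_ub) as [m Hm].
  assert (All : forall z, pe_dom m z).
  { intro z. apply NNPP; intro Hz. destruct (pe_extend m z Hz) as [e' [H1 H2]].
    apply Hz. apply (proj1 (Hm e' H1)); auto. }
  exists (pe_val m). split; [split|split].
  - intros; apply pe_val_add; auto.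
  - intros; apply pe_val_scal; auto.
  - intros; apply pe_val_le; auto.
  - apply pe_val_x0.
Qed.

End HahnBanach.

Lemma real_ind (a b : R) (Q : R -> Prop) :
  a <= b -> Q a ->
  (forall s, a <= s < b -> (forall u, a <= u <= s -> Q u) ->
     exists d, 0 < d /\ forall u, s <= u < s + d -> u <= b -> Q u) ->
  (forall s, a < s <= b -> (forall u, a <= u < s -> Q u) -> Q s) ->
  forall u, a <= u <= b -> Q u.
Proof.
  intros Hab Qa Hstep Hcl.
  set (S := fun s => a <= s <= b /\ forall u, a <= u <= s -> Q u).
  assert (Sa : S a) by (split; [lra|]; intros u Hu; replace u with a by lra; auto).
  assert (Hb : bound S) by (exists b; intros s [[_ H] _]; auto).
  destruct (completeness S Hb (ex_intro _ a Sa)) as [m [Hm1 Hm2]].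
  assert (Ham : a <= m) by (apply Hm1; auto).
  assert (Hmb : m <= b) by (apply Hm2; intros s [[_ H] _]; auto).
  assert (below : forall u, a <= u < m -> Q u).
  { intros u Hu. apply NNPP; intro Hn.
    assert (m <= u); [|lra]. apply Hm2. intros s [Hs1 Hs2]. destruct (Rle_or_lt s u); auto.
    exfalso. apply Hn, Hs2. lra. }
  assert (upto : forall u, a <= u <= m -> Q u).
  { intros u Hu. destruct (Req_dec u m) as [->|]; [|apply below; lra].
    destruct (Req_dec m a) as [->|Hne']; auto. apply Hcl; auto. lra. }
  destruct (Req_dec m b) as [<-|Hmb']; auto.
  exfalso. destruct (Hstep m ltac:(lra) upto) as [d [Hd Hd2]].
  set (s' := Rmin (m + d/2) b).
  assert (Hs'1 : s' <= m + d/2) by apply Rmin_l. assert (Hs'2 : s' <= b) by apply Rmin_r.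
  assert (Hs'3 : m < s') by (unfold s'; apply Rmin_case; lra).
  assert (S s').
  { split. lra. intros u Hu. destruct (Rle_or_lt u m). apply upto; lra. apply Hd2; lra. }
  assert (s' <= m) by (apply Hm1; auto). lra.
Qed.

Definition cont_on (g : R -> R) (a b : R) :=
  forall s, a <= s <= b -> forall eps, 0 < eps -> exists del, 0 < del /\
    forall u, a <= u <= b -> Rabs (u - s) < del -> Rabs (g u - g s) < eps.

(* extreme value theorem on [a, b], from the Stdlib version for functions
   continuous on all of R applied to [g] composed with the clamp to [a, b] *)
Lemma max_on (g : R -> R) a b : a <= b -> cont_on g a b ->
  exists s1, a <= s1 <= b /\ forall u, a <= u <= b -> g u <= g s1.
Proof.
  intros Hab Hc.
  set (cl := fun u => Rmax a (Rmin b u)).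
  assert (Hcl : forall u, a <= cl u <= b) by (intro u; unfold cl; split; [apply Rmax_l|apply Rmax_lub; [lra|apply Rmin_l]]).
  assert (Hcl2 : forall u, a <= u <= b -> cl u = u).
  { intros u Hu. unfold cl. rewrite Rmin_right by lra. rewrite Rmax_right by lra. auto. }
  assert (Hcl3 : forall u s, a <= s <= b -> Rabs (cl u - s) <= Rabs (u - s)).
  { intros u s Hs. unfold cl. unfold Rmax, Rmin. repeat destruct Rle_dec; apply Rabs_le; split;
    try (apply Rabs_le_between); unfold Rabs; repeat destruct Rcase_abs; lra. }
  destruct (continuity_ab_maj (fun u => g (cl u)) a b Hab) as [s1 [H1 H2]].
  - intros c Hc'. unfold continuity_pt, continue_in, limit1_in, limit_in. simpl. unfold R_dist.
    intros eps Heps. destruct (Hc c Hc' eps Heps) as [del [Hdel Hdel2]].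
    exists del. split; auto. intros x [_ Hx]. rewrite (Hcl2 c Hc'). apply Hdel2. apply Hcl.
    eapply Rle_lt_trans. apply Hcl3; auto. auto.
  - exists s1. split; auto. intros u Hu. specialize (H1 u Hu). rewrite !Hcl2 in H1 by auto. auto.
Qed.

Lemma cont_on_sub_linear g a b k : cont_on g a b -> cont_on (fun s => g s - k * (s - a)) a b.
Proof.
  intros Hc s Hs eps Heps. destruct (Hc s Hs (eps/2)) as [d1 [Hd1 Hd2]]. lra.
  assert (Hk := Rabs_pos k).
  exists (Rmin d1 (eps / (2 * (Rabs k + 1)))). split.
  { apply Rmin_case. lra. apply Rdiv_lt_0_compat; lra. }
  intros u Hu Hus.
  assert (Hus1 : Rabs (u - s) < d1) by (eapply Rlt_le_trans; [exact Hus| apply Rmin_l]).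
  assert (Hus2 : Rabs (u - s) * (2 * (Rabs k + 1)) < eps).
  { assert (Hus2 : Rabs (u - s) < eps / (2 * (Rabs k + 1))) by (eapply Rlt_le_trans; [exact Hus| apply Rmin_r]).
    apply Rmult_lt_compat_r with (r := 2 * (Rabs k + 1)) in Hus2; [|lra].
    unfold Rdiv in Hus2. rewrite Rmult_assoc, Rinv_l in Hus2; lra. }
  specialize (Hd2 u Hu Hus1).
  replace (g u - k * (u - a) - (g s - k * (s - a))) with ((g u - g s) + - (k * (u - s))) by ring.
  eapply Rle_lt_trans. apply Rabs_triang. rewrite Rabs_Ropp, Rabs_mult.
  assert (Rabs k * Rabs (u - s) <= (Rabs k + 1) * Rabs (u - s)) by (assert (H := Rabs_pos (u - s)); nra).
  lra.
Qed.

Lemma first_crossing (phi : R -> R) a b s1 v : cont_on phi a b -> a <= s1 <= b ->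
  phi a < v -> v <= phi s1 ->
  exists s2, a < s2 <= s1 /\ v <= phi s2 /\ forall u, a <= u < s2 -> phi u < v.
Proof.
  intros Hc Hs1 Ha Hv. apply NNPP; intro Hno.
  assert (all : forall u, a <= u <= s1 -> phi u < v).
  { apply real_ind; [lra|auto| |].
    - intros s Hs Hall. assert (Hs' : a <= s <= b) by lra.
      destruct (Hc s Hs' (v - phi s)) as [d1 [Hd1 Hd2]]. specialize (Hall s ltac:(lra)). lra.
      exists d1. split; auto. intros u Hu Hu2.
      assert (Hu' : a <= u <= b) by lra.
      assert (Rabs (u - s) < d1) by (rewrite Rabs_right; lra).
      specialize (Hd2 u Hu' H). apply Rabs_def2 in Hd2. lra.
    - intros s Hs Hall. apply NNPP; intro Hn. apply Hno. exists s. split. lra. split. lra. auto. }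
  specialize (all s1 ltac:(lra)). lra.
Qed.

(* If its
   maximum G were positive, g - 2 K G (s - a) would have to increase at the
   first point where it reaches its final value, contradicting g' <= K G. *)
Lemma dini_gronwall (g : R -> R) a b K :
  a < b -> 0 < K -> 2 * K * (b - a) < 1 -> cont_on g a b ->
  (forall s, a <= s <= b -> 0 <= g s) -> g a = 0 ->
  (forall sg, a < sg <= b -> forall eps, 0 < eps -> exists h0, 0 < h0 /\
     forall h, 0 < h < h0 -> h <= sg - a -> g sg - g (sg - h) <= h * (K * g sg + eps)) ->
  forall s, a <= s <= b -> g s = 0.
Proof.
  intros Hab HK Hsmall Hc Hpos Ha Hdini.
  destruct (max_on g a b ltac:(lra) Hc) as [s1 [Hs1 Hmax]].
  set (Gm := g s1).
  destruct (Rle_or_lt Gm 0) as [HG|HG].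
  { intros s Hs. specialize (Hmax s Hs). specialize (Hpos s Hs). unfold Gm in HG. lra. }
  exfalso.
  set (phi := fun s => g s - 2 * K * Gm * (s - a)).
  assert (Hv : phi a < phi s1).
  { unfold phi. rewrite Ha. fold Gm. assert (K * Gm * (s1 - a) <= K * Gm * (b - a)).
    { apply Rmult_le_compat_l. apply Rmult_le_pos; lra. lra. }
    assert (2 * K * (b - a) * Gm < Gm) by nra. nra. }
  destruct (first_crossing phi a b s1 (phi s1) (cont_on_sub_linear g a b _ Hc) Hs1 Hv (Rle_refl _))
    as [s2 [Hs2 [Hv2 Hbel]]].
  destruct (Hdini s2 ltac:(lra) (K * Gm / 2)) as [h0 [Hh0 Hh0']]. apply Rdiv_lt_0_compat; nra.
  set (h := Rmin (h0 / 2) (s2 - a)).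
  assert (Hh : 0 < h < h0) by (unfold h; split; [apply Rmin_case; lra| eapply Rle_lt_trans; [apply Rmin_l|lra]]).
  assert (Hh2 : h <= s2 - a) by apply Rmin_r.
  specialize (Hh0' h Hh Hh2).
  assert (Hgs2 : g s2 <= Gm) by (apply Hmax; lra).
  assert (phi (s2 - h) < phi s1) by (apply Hbel; lra).
  unfold phi in *.
  assert (h * (K * g s2 + K * Gm / 2) <= h * (K * Gm + K * Gm / 2)).
  { apply Rmult_le_compat_l. lra. apply Rplus_le_compat_r. apply Rmult_le_compat_l; lra. }
  assert (HX: 0 < h * (K*Gm)) by (apply Rmult_lt_0_compat; nra).
  assert (E1: g s2 - 2*K*Gm*(s2-a) - (g (s2-h) - 2*K*Gm*(s2-h-a)) = (g s2 - g (s2-h)) - 2*(h*(K*Gm))) by ring.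
  assert (E2: h*(K*Gm + K*Gm/2) = 3/2 * (h*(K*Gm))) by field.
  lra.
Qed.

Definition is_glb (A : R -> Prop) (m : R) :=
  (forall r, A r -> m <= r) /\ (forall b, (forall r, A r -> b <= r) -> b <= m).
Definition Rinf (A : R -> Prop) : R := epsilon (inhabits 0) (is_glb A).

Lemma Rinf_spec A : (exists r, A r) -> (exists b, forall r, A r -> b <= r) -> is_glb A (Rinf A).
Proof.
  intros [r0 Hr0] [b Hb]. unfold Rinf. apply epsilon_spec.
  set (B := fun r => A (- r)).
  assert (HB : bound B) by (exists (-b); intros r Hr; specialize (Hb _ Hr); lra).
  assert (HBn : exists r, B r) by (exists (-r0); unfold B; rewrite Ropp_involutive; auto).
  destruct (completeness B HB HBn) as [m [H1 H2]]. exists (-m). split.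
  - intros r Hr. assert (-r <= m) by (apply H1; unfold B; rewrite Ropp_involutive; auto). lra.
  - intros c Hc. assert (m <= -c); [|lra]. apply H2. intros r Hr. specialize (Hc _ Hr). lra.
Qed.

Lemma glb_approx A m : is_glb A m -> forall eps, 0 < eps -> exists r, A r /\ r < m + eps.
Proof.
  intros [H1 H2] eps Heps. apply NNPP; intro Hn. assert (m + eps <= m); [|lra].
  apply H2. intros r Hr. destruct (Rlt_or_le r (m + eps)); auto. exfalso; apply Hn; eauto.
Qed.

Section GapFunctional.
Context {E : Type} (N : NormedSpace E) (C : E -> Prop).

Record support_witness (P : E -> R) (M : R) (d : E) (eta : R) (q : E) (l : E -> R) : Prop := {
  sw_cone : C q;
  sw_linear : is_linear_functional N l;
  sw_below : forall x, l x <= P x;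
  sw_zero : l q = 0;
  sw_approx : P d - eta <= l d;
  sw_close : vnorm N (vsub N d q) <= M * P d }.

Record gap_functional (P : E -> R) (M : R) : Prop := {
  gap_M_pos : 0 < M;
  gap_subadd : forall x y, P (vadd N x y) <= P x + P y;
  gap_nonneg : forall x, 0 <= P x;
  gap_bound : forall x, P x <= M * vnorm N x;
  gap_cone : forall c, C c -> P c <= 0;
  gap_zero : forall x, P x <= 0 -> C x;
  gap_support : forall d eta, 0 < P d -> 0 < eta -> exists q l, support_witness P M d eta q l }.

End GapFunctional.

Section ConeDistance.
Context {E : Type} (N : NormedSpace E) (S : E -> Prop).
Hypothesis S0 : S (vzero N).
Hypothesis Sadd : forall x y, S x -> S y -> S (vadd N x y).
Hypothesis Sscal : forall a x, 0 < a -> S x -> S (vscal N a x).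

Definition Dist x := Rinf (fun r => exists c, S c /\ r = vdist N x c).

Lemma Dist_glb x : is_glb (fun r => exists c, S c /\ r = vdist N x c) (Dist x).
Proof. apply Rinf_spec. exists (vdist N x (vzero N)); eauto. exists 0. intros r [c [_ ->]]. apply vdist_nonneg. Qed.

Lemma Dist_le x c : S c -> Dist x <= vdist N x c.
Proof. intro Hc. apply (proj1 (Dist_glb x)). eauto. Qed.

Lemma Dist_ge x b : (forall c, S c -> b <= vdist N x c) -> b <= Dist x.
Proof. intro H. apply (proj2 (Dist_glb x)). intros r [c [Hc ->]]. auto. Qed.

Lemma Dist_nonneg x : 0 <= Dist x.
Proof. apply Dist_ge. intros; apply vdist_nonneg. Qed.

Lemma Dist_approx x eps : 0 < eps -> exists c, S c /\ vdist N x c < Dist x + eps.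
Proof. intro He. destruct (glb_approx _ _ (Dist_glb x) eps He) as [r [[c [Hc ->]] H]]. eauto. Qed.

Lemma Dist_bound x : Dist x <= vnorm N x.
Proof. eapply Rle_trans. apply (Dist_le x (vzero N) S0). unfold vdist. right. f_equal. vec_eq N (x::nil). Qed.

Lemma Dist_sub x y : Dist (vadd N x y) <= Dist x + Dist y.
Proof.
  apply Rnot_lt_le; intro H.
  set (e := (Dist (vadd N x y) - Dist x - Dist y) / 3).
  assert (He : 0 < e) by (unfold e; lra).
  destruct (Dist_approx x e He) as [c [Hc Hc2]]. destruct (Dist_approx y e He) as [c' [Hc' Hc2']].
  assert (Dist (vadd N x y) <= vdist N (vadd N x y) (vadd N c c')) by (apply Dist_le; auto).
  assert (vdist N (vadd N x y) (vadd N c c') <= vdist N x c + vdist N y c').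
  { unfold vdist. replace (vsub N (vadd N x y) (vadd N c c')) with (vadd N (vsub N x c) (vsub N y c')) by vec_eq N (x::y::c::c'::nil).
    apply vnorm_triangle. }
  unfold e in *. lra.
Qed.

Lemma Dist_hom_le a x : 0 < a -> Dist (vscal N a x) <= a * Dist x.
Proof.
  intro Ha. assert (Dist (vscal N a x) / a <= Dist x).
  { apply Dist_ge. intros c Hc.
    assert (Dist (vscal N a x) <= vdist N (vscal N a x) (vscal N a c)) by (apply Dist_le; apply Sscal; auto).
    assert (vdist N (vscal N a x) (vscal N a c) = a * vdist N x c).
    { unfold vdist. replace (vsub N (vscal N a x) (vscal N a c)) with (vscal N a (vsub N x c)) by vec_eq N (x::c::nil).
      rewrite vnorm_scal, Rabs_right; lra. }
    apply Rmult_le_reg_r with a; auto. unfold Rdiv. rewrite Rmult_assoc, Rinv_l by lra. lra. }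
  apply Rmult_le_compat_l with (r := a) in H; [|lra].
  replace (a * (Dist (vscal N a x) / a)) with (Dist (vscal N a x)) in H by (field; lra). lra.
Qed.

Lemma Dist_hom a x : 0 < a -> Dist (vscal N a x) = a * Dist x.
Proof.
  intro Ha. apply Rle_antisym. apply Dist_hom_le; auto.
  assert (H := Dist_hom_le (/ a) (vscal N a x) (Rinv_0_lt_compat _ Ha)).
  replace (vscal N (/ a) (vscal N a x)) with x in H by (vec_eq N (x::nil) by (field; lra)).
  apply Rmult_le_compat_l with (r := a) in H; [|lra].
  replace (a * (/ a * Dist (vscal N a x))) with (Dist (vscal N a x)) in H by (field; lra). lra.
Qed.

End ConeDistance.

Section Cone.
Context {E : Type} (N : NormedSpace E) (C : E -> Prop).
Hypothesis HC : is_proper_cone N C.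
Hypothesis HCcl : is_closed N C.

Lemma cone_0 : C (vzero N).
Proof. destruct HC as [_ [_ H]]. apply (proj2 (H (vzero N))); auto. Qed.

Lemma cone_add x y : C x -> C y -> C (vadd N x y).
Proof. destruct HC as [_ [H _]]; auto. Qed.

Lemma cone_scal a x : 0 < a -> C x -> C (vscal N a x).
Proof. destruct HC as [H _]; intros; apply H; auto. Qed.

Lemma not_cone_nbhd x : ~ C x -> exists r, 0 < r /\ forall y, vdist N y x < r -> ~ C y.
Proof. intro H. apply (HCcl x H). Qed.

Definition cone_dist := Dist N C.

Lemma cone_dist_zero x : cone_dist x <= 0 -> C x.
Proof.
  intro H. apply NNPP; intro Hx. destruct (not_cone_nbhd x Hx) as [r [Hr Hr2]].
  assert (r <= cone_dist x); [|lra]. apply (Dist_ge N C cone_0). intros c Hc. rewrite vdist_sym.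
  destruct (Rlt_or_le (vdist N c x) r); auto. exfalso. apply (Hr2 c); auto.
Qed.

Lemma cone_dist_cone c : C c -> cone_dist c <= 0.
Proof. intro Hc. eapply Rle_trans. apply (Dist_le N C cone_0 c c Hc). rewrite vdist_refl. lra. Qed.

Definition ekeland_points := forall d alpha eps, 0 < alpha < 1 -> 0 < eps -> exists x', C x' /\
  vdist N x' d <= cone_dist d + eps /\ forall c, C c -> vdist N x' d <= vdist N c d + alpha * vdist N c x'.

(* At an Ekeland point x' of d, Hahn-Banach applied to the distance to the
   cone C + R x' yields a functional below the distance to C, vanishing at
   x' and almost equal to |d - x'| at d. *)
Section SupportAtEkelandPoint.
Variables (d x' : E) (alpha : R).
Hypothesis Halpha : 0 < alpha < 1.
Hypothesis Cx' : C x'.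
Hypothesis Hvar : forall c, C c -> vdist N x' d <= vdist N c d + alpha * vdist N c x'.

Definition ray_cone k := exists c t, C c /\ k = vadd N c (vscal N t x').

Lemma ray_cone_0 : ray_cone (vzero N).
Proof. exists (vzero N), 0. split; [apply cone_0|vec_eq N (x'::nil)]. Qed.

Lemma ray_cone_add a b : ray_cone a -> ray_cone b -> ray_cone (vadd N a b).
Proof.
  intros [c [t [Hc ->]]] [c' [t' [Hc' ->]]]. exists (vadd N c c'), (t + t').
  split. apply cone_add; auto. vec_eq N (c::c'::x'::nil).
Qed.

Lemma ray_cone_scal a x : 0 < a -> ray_cone x -> ray_cone (vscal N a x).
Proof.
  intros Ha [c [t [Hc ->]]]. exists (vscal N a c), (a * t).
  split. apply cone_scal; auto. vec_eq N (c::x'::nil).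
Qed.

(* test the variational inequality at the point x' + s k of C, s small *)
Lemma ray_cone_key k : ray_cone k ->
  vnorm N (vsub N d x') <= vdist N (vsub N d x') k + alpha * vnorm N k.
Proof.
  intros [c [t [Hc ->]]]. set (k := vadd N c (vscal N t x')). set (w := vsub N d x').
  assert (Ht := Rabs_pos t).
  set (s := / (Rabs t + 1)).
  assert (Hs : 0 < s) by (unfold s; apply Rinv_0_lt_compat; lra).
  assert (Hst : 0 < 1 + s * t).
  { unfold s. assert (Habs : - Rabs t <= t) by (unfold Rabs; destruct Rcase_abs; lra).
    replace (1 + / (Rabs t + 1) * t) with ((Rabs t + 1 + t) / (Rabs t + 1)) by (field; lra).
    apply Rdiv_lt_0_compat; lra. }
  assert (Hs1 : s <= 1) by (unfold s; rewrite <- Rinv_1; apply Rinv_le_contravar; lra).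
  set (pt := vadd N x' (vscal N s k)).
  assert (Cpt : C pt).
  { replace pt with (vadd N (vscal N (1 + s * t) x') (vscal N s c)) by (unfold pt, k; vec_eq N (x'::c::nil)).
    apply cone_add; apply cone_scal; auto. }
  specialize (Hvar pt Cpt).
  assert (E1 : vdist N x' d = vnorm N w) by (unfold w; apply vdist_sym).
  assert (E2 : vdist N pt x' = s * vnorm N k).
  { unfold vdist, pt. replace (vsub N (vadd N x' (vscal N s k)) x') with (vscal N s k) by vec_eq N (x'::k::nil).
    rewrite vnorm_scal, Rabs_right; lra. }
  assert (E3 : vdist N pt d <= s * vdist N w k + (1 - s) * vnorm N w).
  { unfold vdist, pt.
    replace (vsub N (vadd N x' (vscal N s k)) d) with (vadd N (vscal N s (vsub N k w)) (vscal N (1 - s) (vsub N x' d))) by (unfold w; vec_eq N (x'::k::d::nil)).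
    eapply Rle_trans. apply vnorm_triangle. rewrite !vnorm_scal, !Rabs_right by lra.
    assert (vnorm N (vsub N k w) = vnorm N (vsub N w k)) by apply vdist_sym.
    assert (vnorm N (vsub N x' d) = vnorm N w) by (unfold w; apply vdist_sym). rewrite H, H0. lra. }
  apply Rmult_le_reg_l with s; nra.
Qed.

Lemma ray_cone_lower :
  (1 - alpha) / (1 + alpha) * vnorm N (vsub N d x') <= Dist N ray_cone (vsub N d x').
Proof.
  set (w := vsub N d x'). apply (Dist_ge N ray_cone ray_cone_0). intros k Hk. assert (key := ray_cone_key k Hk).
  assert (vnorm N k <= vnorm N w + vdist N w k).
  { replace k with (vadd N w (vsub N k w)) at 1 by vec_eq N (k::w::nil). eapply Rle_trans. apply vnorm_triangle.
    assert (vnorm N (vsub N k w) = vdist N w k) by apply vdist_sym. lra. }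
  assert ((1 - alpha) * vnorm N w <= (1 + alpha) * vdist N w k) by (fold w in key; nra).
  apply Rmult_le_reg_l with (1 + alpha). lra.
  replace ((1 + alpha) * ((1 - alpha) / (1 + alpha) * vnorm N w)) with ((1 - alpha) * vnorm N w) by (field; lra).
  lra.
Qed.

Lemma ekeland_support : exists l, is_linear_functional N l /\ (forall x, l x <= cone_dist x) /\
  l x' = 0 /\ (1 - alpha) / (1 + alpha) * vnorm N (vsub N d x') <= l d.
Proof.
  set (Q := Dist N ray_cone).
  destruct (hahn_banach N Q (Dist_sub N ray_cone ray_cone_0 ray_cone_add) (Dist_hom N ray_cone ray_cone_0 ray_cone_scal)
              (vsub N d x')) as [l [[Hl1 Hl2] [Hl3 Hl4]]].
  assert (QP : forall x, Q x <= cone_dist x).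
  { intro x. apply (Dist_ge N C cone_0). intros c Hc. apply (Dist_le N ray_cone ray_cone_0).
    exists c, 0. split; auto. vec_eq N (c::x'::nil). }
  assert (on_ray : forall t, l (vscal N t x') <= 0).
  { intro t. eapply Rle_trans. apply Hl3. eapply Rle_trans. apply (Dist_le N ray_cone ray_cone_0 _ (vscal N t x')).
    exists (vzero N), t. split. apply cone_0. vec_eq N (x'::nil). rewrite vdist_refl; lra. }
  assert (lx' : l x' = 0).
  { assert (A1 := on_ray 1). assert (A2 := on_ray (-1)). rewrite Hl2 in A1, A2. lra. }
  exists l. split; [split; auto|split; [|split; auto]].
  - intro x. eapply Rle_trans. apply Hl3. apply QP.
  - replace d with (vadd N (vsub N d x') x') at 2 by vec_eq N (d::x'::nil).
    rewrite Hl1, lx', Hl4. fold Q. rewrite Rplus_0_r. apply ray_cone_lower.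
Qed.

End SupportAtEkelandPoint.

Lemma gap_from_ekeland : ekeland_points -> gap_functional N C cone_dist 2.
Proof.
  intro HEP. split.
  - lra.
  - apply (Dist_sub N C cone_0 cone_add).
  - apply (Dist_nonneg N C cone_0).
  - intro x. assert (H := Dist_bound N C cone_0 x). assert (H2 := vnorm_nonneg N x). unfold cone_dist. lra.
  - exact cone_dist_cone.
  - exact cone_dist_zero.
  - intros d eta Hd Heta. set (del := cone_dist d) in *.
    set (alpha := Rmin (1/2) (eta / (2 * del))).
    assert (Hal : 0 < alpha <= 1/2) by (unfold alpha; split; [apply Rmin_case; [lra|apply Rdiv_lt_0_compat; lra]|apply Rmin_l]).
    assert (Hal2 : alpha * (2 * del) <= eta).
    { assert (H : alpha <= eta / (2*del)) by apply Rmin_r.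
      apply Rmult_le_compat_r with (r := 2 * del) in H; [|lra]. unfold Rdiv in H. rewrite Rmult_assoc, Rinv_l in H; lra. }
    destruct (HEP d alpha del ltac:(lra) Hd) as [x' [Cx' [Hx'1 Hx'2]]].
    destruct (ekeland_support d x' alpha ltac:(lra) Cx' Hx'2) as [l [Hl [Hle [lx' Hld]]]].
    set (w := vsub N d x') in *.
    assert (Hw : del <= vnorm N w) by (apply (Dist_le N C cone_0 d x' Cx')).
    assert (E0: vdist N x' d = vnorm N w) by (unfold w; apply vdist_sym).
    assert (Hw2 : vnorm N w <= 2 * del) by (fold del in Hx'1; lra).
    assert (Hratio : (1 - 2 * alpha) * vnorm N w <= (1 - alpha) / (1 + alpha) * vnorm N w).
    { apply Rmult_le_compat_r. apply vnorm_nonneg.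
      apply Rmult_le_reg_r with (1 + alpha). lra.
      replace ((1 - alpha) / (1 + alpha) * (1 + alpha)) with (1 - alpha) by (field; lra). nra. }
    assert ((1 - 2 * alpha) * del <= (1 - 2 * alpha) * vnorm N w) by (apply Rmult_le_compat_l; lra).
    exists x', l. split; auto; fold del; lra.
Qed.

Lemma ekeland_from_distance_set : is_distance_set N C -> ekeland_points.
Proof.
  intros HD d alpha eps Ha He. destruct (HD d) as [y [Cy Hy]]. exists y. split; auto. split.
  - rewrite vdist_sym. assert (vdist N d y <= cone_dist d); [|lra]. apply (Dist_ge N C cone_0). auto.
  - intros c Hc. rewrite (vdist_sym N y d), (vdist_sym N c d). specialize (Hy c Hc).
    assert (0 <= alpha * vdist N c y) by (apply Rmult_le_pos; [lra|apply vdist_nonneg]). lra.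
Qed.

End Cone.

(* Interior case: if the ball B(e, r) lies in C, the gauge
   G x = inf { a >= 0 | x + a e in C } is a gap functional; the supporting
   functional at d is a Hahn-Banach functional for G normalised at d, and
   q = d + G(d) e is the point of C close to d. *)
Section Gauge.
Context {E : Type} (N : NormedSpace E) (C : E -> Prop).
Hypothesis HC : is_proper_cone N C.
Hypothesis HCcl : is_closed N C.
Variables (e : E) (r : R).
Hypothesis Hr : 0 < r.
Hypothesis Hball : forall y, vdist N y e < r -> C y.

Definition gauge_adm x a := 0 <= a /\ C (vadd N x (vscal N a e)).
Definition gauge x := Rinf (gauge_adm x).

Lemma gauge_adm_bound x : gauge_adm x (2 * vnorm N x / r).
Proof.
  assert (Hn := vnorm_nonneg N x).
  destruct (Req_dec (vnorm N x) 0) as [H0|H0].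
  - apply vnorm_eq0 in H0 as Hx. subst. rewrite vnorm_0. split. lra.
    replace (vadd N (vzero N) (vscal N (2 * 0 / r) e)) with (vzero N) by (vec_eq N (e::nil) by (field; lra)).
    apply cone_0; auto.
  - set (a := 2 * vnorm N x / r). assert (Ha : 0 < a) by (unfold a; apply Rdiv_lt_0_compat; lra).
    split. lra.
    replace (vadd N x (vscal N a e)) with (vscal N a (vadd N e (vscal N (/ a) x))) by (vec_eq N (x::e::nil) by (field; lra)).
    apply cone_scal; auto. apply Hball. unfold vdist.
    replace (vsub N (vadd N e (vscal N (/ a) x)) e) with (vscal N (/ a) x) by vec_eq N (x::e::nil).
    rewrite vnorm_scal, Rabs_right by (apply Rle_ge, Rlt_le, Rinv_0_lt_compat; auto).
    unfold a. replace (/ (2 * vnorm N x / r) * vnorm N x) with (r / 2) by (field; lra). lra.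
Qed.

Lemma gauge_glb x : is_glb (gauge_adm x) (gauge x).
Proof. apply Rinf_spec. eexists; apply gauge_adm_bound. exists 0. intros a [Ha _]; auto. Qed.

Lemma gauge_nonneg x : 0 <= gauge x.
Proof. apply (proj2 (gauge_glb x)). intros a [Ha _]; auto. Qed.

Lemma gauge_le x a : gauge_adm x a -> gauge x <= a.
Proof. apply (proj1 (gauge_glb x)). Qed.

(* the infimum is attained since C is closed *)
Lemma gauge_attained x : gauge_adm x (gauge x).
Proof.
  split. apply gauge_nonneg. apply NNPP; intro Hn.
  destruct (not_cone_nbhd N C HCcl _ Hn) as [rho [Hrho Hrho2]].
  assert (He := vnorm_nonneg N e).
  destruct (glb_approx _ _ (gauge_glb x) (rho / (vnorm N e + 1))) as [a [Ha Ha2]].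
  { apply Rdiv_lt_0_compat; lra. }
  apply (Hrho2 (vadd N x (vscal N a e))). 2: apply Ha.
  assert (gauge x <= a) by (apply gauge_le; auto).
  unfold vdist. replace (vsub N (vadd N x (vscal N a e)) (vadd N x (vscal N (gauge x) e))) with (vscal N (a - gauge x) e) by vec_eq N (x::e::nil).
  rewrite vnorm_scal, Rabs_right by lra.
  assert ((a - gauge x) * (vnorm N e + 1) < rho).
  { apply Rmult_lt_compat_r with (r := vnorm N e + 1) in Ha2; [|lra].
    replace ((gauge x + rho / (vnorm N e + 1)) * (vnorm N e + 1)) with (gauge x * (vnorm N e + 1) + rho) in Ha2 by (field; lra).
    nra. }
  nra.
Qed.

Lemma gauge_sub x y : gauge (vadd N x y) <= gauge x + gauge y.
Proof.
  apply gauge_le. destruct (gauge_attained x) as [H1 H2]. destruct (gauge_attained y) as [H3 H4]. split. lra.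
  replace (vadd N (vadd N x y) (vscal N (gauge x + gauge y) e))
    with (vadd N (vadd N x (vscal N (gauge x) e)) (vadd N y (vscal N (gauge y) e))) by vec_eq N (x::y::e::nil).
  apply cone_add; auto.
Qed.

Lemma gauge_hom a x : 0 < a -> gauge (vscal N a x) = a * gauge x.
Proof.
  intro Ha. apply Rle_antisym.
  - apply gauge_le. destruct (gauge_attained x) as [H1 H2]. split. nra.
    replace (vadd N (vscal N a x) (vscal N (a * gauge x) e)) with (vscal N a (vadd N x (vscal N (gauge x) e))) by vec_eq N (x::e::nil).
    apply cone_scal; auto.
  - assert (gauge x <= gauge (vscal N a x) / a).
    { apply gauge_le. destruct (gauge_attained (vscal N a x)) as [H1 H2]. split.
      { unfold Rdiv. apply Rmult_le_pos; [lra|left; apply Rinv_0_lt_compat; lra]. }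
      replace (vadd N x (vscal N (gauge (vscal N a x) / a) e))
        with (vscal N (/ a) (vadd N (vscal N a x) (vscal N (gauge (vscal N a x)) e))) by (vec_eq N (x::e::nil) by (field; lra)).
      apply cone_scal; auto. apply Rinv_0_lt_compat; auto. }
    apply Rmult_le_compat_l with (r := a) in H; [|lra].
    replace (a * (gauge (vscal N a x) / a)) with (gauge (vscal N a x)) in H by (field; lra). lra.
Qed.

Lemma gauge_cone_eq0 c : C c -> gauge c <= 0.
Proof.
  intro Hc. apply gauge_le. split. lra. replace (vadd N c (vscal N 0 e)) with c by vec_eq N (c::e::nil). auto.
Qed.

Theorem gap_gauge : gap_functional N C gauge (2 / r + vnorm N e + 1).
Proof.
  assert (He := vnorm_nonneg N e). assert (Hr2 : 0 < 2 / r) by (apply Rdiv_lt_0_compat; lra).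
  split.
  - lra.
  - apply gauge_sub.
  - apply gauge_nonneg.
  - intro x. eapply Rle_trans. apply gauge_le, gauge_adm_bound. assert (Hx := vnorm_nonneg N x).
    replace (2 * vnorm N x / r) with (2 / r * vnorm N x) by (field; lra). nra.
  - exact gauge_cone_eq0.
  - intros x Hx. assert (H0 : gauge x = 0) by (assert (H := gauge_nonneg x); lra).
    destruct (gauge_attained x) as [_ H1].
    rewrite H0 in H1. replace (vadd N x (vscal N 0 e)) with x in H1 by vec_eq N (x::e::nil). auto.
  - intros d eta Hd Heta.
    destruct (hahn_banach N gauge gauge_sub gauge_hom d) as [l [[Hl1 Hl2] [Hl3 Hl4]]].
    set (q := vadd N d (vscal N (gauge d) e)).
    assert (Cq : C q) by apply (proj2 (gauge_attained d)).
    assert (lq1 : l q <= 0) by (eapply Rle_trans; [apply Hl3|]; apply gauge_cone_eq0; auto).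
    assert (le1 : l (vscal N (-1) e) <= 1).
    { eapply Rle_trans. apply Hl3. apply gauge_le. split. lra.
      replace (vadd N (vscal N (-1) e) (vscal N 1 e)) with (vzero N) by vec_eq N (e::nil). apply cone_0; auto. }
    rewrite Hl2 in le1.
    assert (lq : l q = l d + gauge d * l e) by (unfold q; rewrite Hl1, Hl2; auto).
    assert (0 <= gauge d * (1 + l e)) by (apply Rmult_le_pos; lra).
    exists q, l. split; auto; [split; auto|lra|lra|].
    unfold q. replace (vsub N d (vadd N d (vscal N (gauge d) e))) with (vscal N (- gauge d) e) by vec_eq N (d::e::nil).
    rewrite vnorm_scal, Rabs_Ropp, Rabs_right by lra. nra.
Qed.

End Gauge.

Lemma half_pow_small y : 0 < y -> exists M, forall n, (n >= M)%nat -> (1/2)^n < y.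
Proof.
  intro Hy. destruct (pow_lt_1_zero (1/2) ltac:(rewrite Rabs_right; lra) y Hy) as [M HM].
  exists M. intros n Hn. specialize (HM n Hn). rewrite Rabs_right in HM; auto. apply Rle_ge, pow_le; lra.
Qed.

(* Starting near a nearest point, choose successively points
   improving the perturbed distance by almost the maximal amount; the
   admissible sets shrink geometrically, so the choices form a Cauchy
   sequence whose limit is an Ekeland point. *)
Section Ekeland.
Context {E : Type} (N : NormedSpace E) (C : E -> Prop).
Hypothesis HCcl : is_closed N C.
Hypothesis Hcomp : is_complete N.
Variables (d : E) (alpha : R).
Hypothesis Halpha : 0 < alpha.

Definition ek_phi x := vdist N x d.
Definition ek_rel x c := C c /\ ek_phi c + alpha * vdist N c x <= ek_phi x.

Lemma ek_rel_refl x : C x -> ek_rel x x.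
Proof. intro Hx. split; auto. rewrite vdist_refl. lra. Qed.

Lemma ek_rel_trans x y c : ek_rel x y -> ek_rel y c -> ek_rel x c.
Proof. intros [Cy H1] [Cc H2]. split; auto. assert (H3 := vdist_tri N c y x). nra. Qed.

Definition ek_inf x := Rinf (fun r => exists c, ek_rel x c /\ r = ek_phi c).

Lemma ek_inf_glb x : C x -> is_glb (fun r => exists c, ek_rel x c /\ r = ek_phi c) (ek_inf x).
Proof.
  intro Hx. apply Rinf_spec. exists (ek_phi x); exists x; split; auto. apply ek_rel_refl; auto.
  exists 0. intros r [c [_ ->]]. apply vdist_nonneg.
Qed.

Definition ek_next (n : nat) x := epsilon (inhabits (vzero N))
  (fun c => ek_rel x c /\ ek_phi c < ek_inf x + alpha * (1/2)^n).

Lemma ek_next_spec n x : C x -> ek_rel x (ek_next n x) /\ ek_phi (ek_next n x) < ek_inf x + alpha * (1/2)^n.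
Proof.
  intro Hx. unfold ek_next. apply epsilon_spec.
  destruct (glb_approx _ _ (ek_inf_glb x Hx) (alpha * (1/2)^n)) as [r [[c [Hc ->]] Hr]].
  apply Rmult_lt_0_compat. lra. apply pow_lt; lra. eauto.
Qed.

Variable x0 : E.
Hypothesis Cx0 : C x0.

Fixpoint ek_seq (n : nat) : E := match n with O => x0 | S n => ek_next n (ek_seq n) end.

Lemma ek_seq_cone n : C (ek_seq n).
Proof. induction n; simpl; auto. apply (proj1 (ek_next_spec n _ IHn)). Qed.

Lemma ek_seq_nested n k : ek_rel (ek_seq n) (ek_seq (n + k)%nat).
Proof.
  induction k. rewrite Nat.add_0_r. apply ek_rel_refl, ek_seq_cone.
  rewrite Nat.add_succ_r. eapply ek_rel_trans; eauto. apply (ek_next_spec _ _ (ek_seq_cone _)).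
Qed.

Lemma ek_seq_diam n c : ek_rel (ek_seq (S n)) c -> vdist N c (ek_seq (S n)) <= (1/2)^n.
Proof.
  intro Hc. destruct (ek_next_spec n _ (ek_seq_cone n)) as [Hrel H1].
  assert (ek_inf (ek_seq n) <= ek_phi c).
  { apply (proj1 (ek_inf_glb _ (ek_seq_cone n))). exists c. split; auto. eapply ek_rel_trans; eauto. }
  destruct Hc as [_ Hc]. change (ek_seq (S n)) with (ek_next n (ek_seq n)) in *.
  apply Rmult_le_reg_l with alpha; lra.
Qed.

Lemma ek_seq_cauchy eps : 0 < eps -> exists M, forall n m, (M <= n)%nat -> (M <= m)%nat ->
  vdist N (ek_seq n) (ek_seq m) < eps.
Proof.
  intro He. destruct (half_pow_small (eps/2) ltac:(lra)) as [M HM].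
  exists (S M). intros n m Hn Hm.
  assert (A1 : vdist N (ek_seq n) (ek_seq (S M)) <= (1/2)^M).
  { apply ek_seq_diam. replace n with (S M + (n - S M))%nat by lia. apply ek_seq_nested. }
  assert (A2 : vdist N (ek_seq m) (ek_seq (S M)) <= (1/2)^M).
  { apply ek_seq_diam. replace m with (S M + (m - S M))%nat by lia. apply ek_seq_nested. }
  specialize (HM M (le_n M)). assert (H := vdist_tri N (ek_seq n) (ek_seq (S M)) (ek_seq m)).
  rewrite (vdist_sym N (ek_seq (S M)) (ek_seq m)) in H. lra.
Qed.

Lemma ek_limit : exists x', (forall n, ek_rel (ek_seq n) x') /\
  forall eps, 0 < eps -> exists M, forall n, (M <= n)%nat -> vdist N (ek_seq n) x' < eps.
Proof.
  destruct (Hcomp ek_seq ek_seq_cauchy) as [x' Hlim]. exists x'. split; auto.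
  assert (Cx' : C x').
  { apply NNPP; intro Hn. destruct (not_cone_nbhd N C HCcl x' Hn) as [rho [Hrho Hr2]].
    destruct (Hlim rho Hrho) as [M HM]. apply (Hr2 (ek_seq M)). apply HM; lia. apply ek_seq_cone. }
  intro n. split; auto. apply Rnot_lt_le; intro Hlt.
  set (kap := (ek_phi x' + alpha * vdist N x' (ek_seq n) - ek_phi (ek_seq n)) / (2 * (1 + alpha))).
  assert (Hk : 0 < kap) by (unfold kap; apply Rdiv_lt_0_compat; lra).
  destruct (Hlim kap Hk) as [M HM]. set (m := (n + M)%nat). specialize (HM m ltac:(unfold m; lia)).
  destruct (ek_seq_nested n M) as [_ H1]. fold m in H1.
  assert (H2 : ek_phi x' <= ek_phi (ek_seq m) + vdist N x' (ek_seq m)).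
  { unfold ek_phi. eapply Rle_trans. apply (vdist_tri N x' (ek_seq m) d). lra. }
  assert (H3 : vdist N x' (ek_seq n) <= vdist N x' (ek_seq m) + vdist N (ek_seq m) (ek_seq n)) by apply vdist_tri.
  assert (Hs : vdist N x' (ek_seq m) = vdist N (ek_seq m) x') by apply vdist_sym.
  assert (Ek : 2 * kap + 2 * (alpha * kap) = ek_phi x' + alpha * vdist N x' (ek_seq n) - ek_phi (ek_seq n))
    by (unfold kap; field; lra).
  nra.
Qed.

Lemma ek_limit_minimal x' : (forall n, ek_rel (ek_seq n) x') ->
  forall c, C c -> ek_phi x' <= ek_phi c + alpha * vdist N c x'.
Proof.
  intros Sx' c Hc. apply Rnot_lt_le; intro Hlt.
  assert (Sc : ek_rel x' c) by (split; auto; lra).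
  assert (Hcx : vdist N c x' = 0).
  { apply Rle_antisym; [|apply vdist_nonneg]. apply Rnot_lt_le; intro Hpos.
    destruct (half_pow_small (vdist N c x' / 2) ltac:(lra)) as [M HM]. specialize (HM M (le_n M)).
    assert (A1 := ek_seq_diam M c (ek_rel_trans _ _ _ (Sx' _) Sc)).
    assert (A2 := ek_seq_diam M x' (Sx' _)).
    assert (H := vdist_tri N c (ek_seq (S M)) x'). rewrite (vdist_sym N (ek_seq (S M)) x') in H. lra. }
  apply vdist_eq0 in Hcx. subst c. rewrite vdist_refl in Hlt. lra.
Qed.

End Ekeland.

Theorem ekeland_complete {E : Type} (N : NormedSpace E) (C : E -> Prop) :
  is_proper_cone N C -> is_closed N C -> is_complete N -> ekeland_points N C.
Proof.
  intros HC HCcl Hcomp d alpha eps Ha He.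
  destruct (Dist_approx N C (cone_0 N C HC) d eps He) as [x0 [Cx0 Hx0]].
  destruct (ek_limit N C HCcl Hcomp d alpha ltac:(lra) x0 Cx0) as [x' [Sx' _]].
  exists x'. split; [apply (Sx' O)|split].
  - destruct (Sx' O) as [_ H]. simpl in H. unfold ek_phi in H.
    assert (0 <= alpha * vdist N x' x0) by (apply Rmult_le_pos; [lra|apply vdist_nonneg]).
    rewrite (vdist_sym N d x0) in Hx0. unfold cone_dist. lra.
  - apply (ek_limit_minimal N C d alpha ltac:(lra) x0 Cx0 x' Sx').
Qed.

Section Curves.
Context {E : Type} (N : NormedSpace E).

Definition vcont (D : R -> Prop) (u : R -> E) (t : R) :=
  forall eps, 0 < eps -> exists del, 0 < del /\ forall s, D s -> Rabs (s - t) < del -> vdist N (u s) (u t) < eps.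

Lemma deriv_cont D x t v : has_derivative_within N D x t v -> vcont D x t.
Proof.
  intros Hd eps Heps. destruct (Hd 1 ltac:(lra)) as [d1 [Hd1 Hd2]].
  assert (Hv := vnorm_nonneg N v).
  exists (Rmin d1 (eps / (vnorm N v + 1))). split.
  apply Rmin_case; auto. apply Rdiv_lt_0_compat; lra.
  intros s Ds Hs. destruct (Req_dec s t) as [->|Hne]. rewrite vdist_refl; auto.
  assert (Hs1 : Rabs (s - t) < d1) by (eapply Rlt_le_trans; [exact Hs|apply Rmin_l]).
  assert (Hs2 : Rabs (s - t) < eps / (vnorm N v + 1)) by (eapply Rlt_le_trans; [exact Hs|apply Rmin_r]).
  specialize (Hd2 s Ds Hne Hs1).
  set (q := vscal N (/ (s - t)) (vsub N (x s) (x t))) in *.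
  assert (Hq : vnorm N q <= vnorm N v + 1).
  { assert (H := vnorm_triangle N (vsub N q v) v). replace (vadd N (vsub N q v) v) with q in H by vec_eq N (q::v::nil).
    unfold vdist in Hd2. lra. }
  assert (Hst : s - t <> 0) by lra.
  unfold vdist. replace (vsub N (x s) (x t)) with (vscal N (s - t) q) by (unfold q; vec_eq N (x s :: x t :: nil) by (field; auto)).
  rewrite vnorm_scal.
  assert (Rabs (s - t) * vnorm N q <= Rabs (s - t) * (vnorm N v + 1)) by (apply Rmult_le_compat_l; [apply Rabs_pos|auto]).
  assert (Rabs (s - t) * (vnorm N v + 1) < eps).
  { apply Rmult_lt_compat_r with (r := vnorm N v + 1) in Hs2; [|lra].
    unfold Rdiv in Hs2. rewrite Rmult_assoc, Rinv_l in Hs2; lra. }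
  lra.
Qed.

Lemma vcont_comb D u w t a b : vcont D u t -> vcont D w t ->
  vcont D (fun s => vadd N (vscal N a (u s)) (vscal N b (w s))) t.
Proof.
  intros Hu Hw eps Heps. set (e' := eps / (Rabs a + Rabs b + 1)).
  assert (Ha := Rabs_pos a). assert (Hb := Rabs_pos b).
  assert (He' : 0 < e') by (unfold e'; apply Rdiv_lt_0_compat; lra).
  destruct (Hu e' He') as [d1 [Hd1 H1]]. destruct (Hw e' He') as [d2 [Hd2 H2]].
  exists (Rmin d1 d2). split. apply Rmin_case; auto.
  intros s Ds Hs. specialize (H1 s Ds (Rlt_le_trans _ _ _ Hs (Rmin_l _ _))).
  specialize (H2 s Ds (Rlt_le_trans _ _ _ Hs (Rmin_r _ _))).
  unfold vdist in *.
  replace (vsub N (vadd N (vscal N a (u s)) (vscal N b (w s))) (vadd N (vscal N a (u t)) (vscal N b (w t))))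
    with (vadd N (vscal N a (vsub N (u s) (u t))) (vscal N b (vsub N (w s) (w t)))) by vec_eq N (u s :: u t :: w s :: w t :: nil).
  eapply Rle_lt_trans. apply vnorm_triangle. rewrite !vnorm_scal.
  assert (Rabs a * vnorm N (vsub N (u s) (u t)) <= Rabs a * e') by (apply Rmult_le_compat_l; lra).
  assert (Rabs b * vnorm N (vsub N (w s) (w t)) <= Rabs b * e') by (apply Rmult_le_compat_l; lra).
  assert ((Rabs a + Rabs b) * e' < eps).
  { assert (Ee: e' * (Rabs a + Rabs b + 1) = eps) by (unfold e'; field; lra). nra. }
  lra.
Qed.

Lemma deriv_comb D x y z t vx vy vz a b :
  has_derivative_within N D x t vx -> has_derivative_within N D y t vy -> has_derivative_within N D z t vz ->
  has_derivative_within N D (fun s => vsub N (vadd N (vscal N a (x s)) (vscal N b (y s))) (z s)) t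
     (vsub N (vadd N (vscal N a vx) (vscal N b vy)) vz).
Proof.
  intros Hx Hy Hz eps Heps. set (e' := eps / (Rabs a + Rabs b + 2)).
  assert (Ha := Rabs_pos a). assert (Hb := Rabs_pos b).
  assert (He' : 0 < e') by (unfold e'; apply Rdiv_lt_0_compat; lra).
  destruct (Hx e' He') as [d1 [Hd1 H1]]. destruct (Hy e' He') as [d2 [Hd2 H2]]. destruct (Hz e' He') as [d3 [Hd3 H3]].
  exists (Rmin d1 (Rmin d2 d3)). split. repeat apply Rmin_case; auto.
  intros s Ds Hne Hs.
  assert (Hs1 : Rabs (s - t) < d1) by (eapply Rlt_le_trans; [exact Hs|apply Rmin_l]).
  assert (Hs2 : Rabs (s - t) < d2) by (eapply Rlt_le_trans; [exact Hs|]; eapply Rle_trans; [apply Rmin_r|apply Rmin_l]).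
  assert (Hs3 : Rabs (s - t) < d3) by (eapply Rlt_le_trans; [exact Hs|]; eapply Rle_trans; [apply Rmin_r|apply Rmin_r]).
  specialize (H1 s Ds Hne Hs1). specialize (H2 s Ds Hne Hs2). specialize (H3 s Ds Hne Hs3).
  unfold vdist in *.
  set (qx := vsub N (vscal N (/ (s - t)) (vsub N (x s) (x t))) vx) in *.
  set (qy := vsub N (vscal N (/ (s - t)) (vsub N (y s) (y t))) vy) in *.
  set (qz := vsub N (vscal N (/ (s - t)) (vsub N (z s) (z t))) vz) in *.
  replace (vsub N (vscal N (/ (s - t)) (vsub N (vsub N (vadd N (vscal N a (x s)) (vscal N b (y s))) (z s))
                                          (vsub N (vadd N (vscal N a (x t)) (vscal N b (y t))) (z t))))
                  (vsub N (vadd N (vscal N a vx) (vscal N b vy)) vz))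
    with (vsub N (vadd N (vscal N a qx) (vscal N b qy)) qz)
    by (unfold qx, qy, qz; vec_eq N (x s :: x t :: y s :: y t :: z s :: z t :: vx :: vy :: vz :: nil)).
  eapply Rle_lt_trans. apply vnorm_triangle. rewrite vnorm_opp.
  eapply Rle_lt_trans. apply Rplus_le_compat_r. apply vnorm_triangle. rewrite !vnorm_scal.
  assert (Rabs a * vnorm N qx <= Rabs a * e') by (apply Rmult_le_compat_l; lra).
  assert (Rabs b * vnorm N qy <= Rabs b * e') by (apply Rmult_le_compat_l; lra).
  assert ((Rabs a + Rabs b + 1) * e' < eps).
  { assert (Ee: e' * (Rabs a + Rabs b + 2) = eps) by (unfold e'; field; lra). nra. }
  lra.
Qed.

Lemma deriv_left D x sg v : has_derivative_within N D x sg v ->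
  forall eps, 0 < eps -> exists h1, 0 < h1 /\ forall h, 0 < h < h1 -> D (sg - h) ->
    vnorm N (vsub N (vsub N (x sg) (x (sg - h))) (vscal N h v)) <= h * eps.
Proof.
  intros Hd eps Heps. destruct (Hd eps Heps) as [d1 [Hd1 H1]]. exists d1. split; auto.
  intros h Hh Dh. assert (Hne : sg - h <> sg) by lra.
  assert (Habs : Rabs (sg - h - sg) < d1) by (replace (sg - h - sg) with (- h) by ring; rewrite Rabs_Ropp, Rabs_right; lra).
  specialize (H1 _ Dh Hne Habs). unfold vdist in H1.
  replace (sg - h - sg) with (- h) in H1 by ring.
  replace (vsub N (vsub N (x sg) (x (sg - h))) (vscal N h v))
    with (vscal N h (vsub N (vscal N (/ - h) (vsub N (x (sg - h)) (x sg))) v))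
    by (vec_eq N (x sg :: x (sg - h) :: v :: nil) by (field; lra)).
  rewrite vnorm_scal, Rabs_right by lra. apply Rmult_le_compat_l; lra.
Qed.

Lemma prefix_finite_cover {Idx : Type} (O : Idx -> E -> Prop) (v : nat -> E) :
  (forall n, exists i, O i (v n)) -> forall M, exists l, forall n, (n < M)%nat -> exists i, In i l /\ O i (v n).
Proof.
  intros Hv M. induction M as [|M [l Hl]]. exists nil. intros; lia.
  destruct (Hv M) as [i Hi]. exists (i :: l). intros n Hn. destruct (Nat.eq_dec n M) as [->|].
  - exists i; split; auto. left; auto.
  - destruct (Hl n ltac:(lia)) as [j [Hj Hj2]]. exists j; split; auto. right; auto.
Qed.

(* a point together with two sequences converging to it is compact: the
   member of a cover containing the limit captures both tails *)
Lemma seq_compact (L : E) (u w : nat -> E) :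
  (forall eps, 0 < eps -> exists M, forall n, (M <= n)%nat -> vdist N (u n) L < eps) ->
  (forall eps, 0 < eps -> exists M, forall n, (M <= n)%nat -> vdist N (w n) L < eps) ->
  is_compact N (fun x => x = L \/ (exists n, x = u n) \/ (exists n, x = w n)).
Proof.
  intros Hu Hw Idx O Hopen Hcov.
  destruct (Hcov L (or_introl eq_refl)) as [i0 Hi0].
  destruct (Hopen i0 L Hi0) as [r [Hr Hball]].
  destruct (Hu r Hr) as [Mu HMu]. destruct (Hw r Hr) as [Mw HMw].
  destruct (prefix_finite_cover O u (fun n => Hcov (u n) (or_intror (or_introl (ex_intro _ n eq_refl)))) Mu) as [lu Hlu].
  destruct (prefix_finite_cover O w (fun n => Hcov (w n) (or_intror (or_intror (ex_intro _ n eq_refl)))) Mw) as [lw Hlw].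
  exists (i0 :: lu ++ lw). intros x [->|[[n ->]|[n ->]]].
  - exists i0; split; auto. left; auto.
  - destruct (Nat.lt_ge_cases n Mu) as [Hn|Hn].
    + destruct (Hlu n Hn) as [j [Hj Hj2]]. exists j; split; auto. right; apply in_or_app; auto.
    + exists i0. split. left; auto. apply Hball. apply HMu; auto.
  - destruct (Nat.lt_ge_cases n Mw) as [Hn|Hn].
    + destruct (Hlw n Hn) as [j [Hj Hj2]]. exists j; split; auto. right; apply in_or_app; auto.
    + exists i0. split. left; auto. apply Hball. apply HMw; auto.
Qed.

End Curves.

Section GapFacts.
Context {E : Type} (N : NormedSpace E) (C : E -> Prop) (P : E -> R) (M : R).
Hypothesis Hgap : gap_functional N C P M.

Lemma gap_at_0 : P (vzero N) = 0.
Proof.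
  assert (H := gap_bound _ _ _ _ Hgap (vzero N)). rewrite vnorm_0 in H.
  assert (H2 := gap_nonneg _ _ _ _ Hgap (vzero N)). lra.
Qed.

Lemma gap_lipschitz x z : Rabs (P x - P z) <= M * vnorm N (vsub N x z).
Proof.
  destruct Hgap as [_ Psub _ Pbd _ _ _]. apply Rabs_le. split.
  - assert (H := Psub x (vsub N z x)). replace (vadd N x (vsub N z x)) with z in H by vec_eq N (x::z::nil).
    assert (H2 := Pbd (vsub N z x)). assert (E1 : vnorm N (vsub N z x) = vnorm N (vsub N x z)) by apply vdist_sym.
    rewrite E1 in H2. lra.
  - assert (H := Psub z (vsub N x z)). replace (vadd N z (vsub N x z)) with x in H by vec_eq N (x::z::nil).
    assert (H2 := Pbd (vsub N x z)). lra.
Qed.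

Lemma lin_sub l a b : is_linear_functional N l -> l (vsub N a b) = l a - l b.
Proof. intros [H1 H2]. unfold vsub. rewrite H1, vopp_scal, H2. ring. Qed.

Lemma dominated_bound l : is_linear_functional N l -> (forall x, l x <= P x) ->
  forall v, Rabs (l v) <= M * vnorm N v.
Proof.
  intros Hl Hle v. destruct Hgap as [_ _ _ Pbd _ _ _]. apply Rabs_le. split.
  - assert (H := Hle (vopp N v)). rewrite vopp_scal, (proj2 Hl) in H. assert (H2 := Pbd (vscal N (-1) v)).
    rewrite vnorm_scal, Rabs_m1 in H2. lra.
  - eapply Rle_trans. apply Hle. apply Pbd.
Qed.

Lemma dominated_dual l : is_linear_functional N l -> (forall x, l x <= P x) ->
  in_dual_cone N C (fun v => - l v).
Proof.
  intros Hl Hle. assert (HM := gap_M_pos _ _ _ _ Hgap). split; [split|split].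
  - intros a b. rewrite (proj1 Hl). ring.
  - intros a b. rewrite (proj2 Hl). ring.
  - intros a eps Heps. exists (eps / M). split. apply Rdiv_lt_0_compat; auto.
    intros b Hb. replace (- l b - - l a) with (- l (vsub N b a)) by (rewrite lin_sub; auto; ring).
    rewrite Rabs_Ropp. eapply Rle_lt_trans. apply dominated_bound; auto. unfold vdist in Hb.
    apply Rmult_lt_compat_l with (r := M) in Hb; auto. replace (M * (eps / M)) with eps in Hb by (field; lra). lra.
  - intros c Hc. assert (l c <= 0) by (eapply Rle_trans; [apply Hle|apply (gap_cone _ _ _ _ Hgap); auto]). lra.
Qed.

End GapFacts.

Lemma gap_functional_exists {E : Type} (N : NormedSpace E) (C : E -> Prop) :
  is_proper_cone N C -> is_closed N C ->
  has_nonempty_interior N C \/ is_complete N \/ is_distance_set N C ->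
  exists P M, gap_functional N C P M.
Proof.
  intros HC HCcl [[e [r [Hr Hb]]]|[Hcomp|Hds]]; do 2 eexists.
  - apply (gap_gauge N C HC HCcl e r Hr Hb).
  - apply (gap_from_ekeland N C HC HCcl (ekeland_complete N C HC HCcl Hcomp)).
  - apply (gap_from_ekeland N C HC HCcl (ekeland_from_distance_set N C HC Hds)).
Qed.

Lemma small_inv (del : R) : 0 < del -> exists n : nat, forall m, (n <= m)%nat -> / (INR m + 1) < del.
Proof.
  intro Hd. destruct (INR_unbounded (/ del)) as [n Hn]. exists n. intros m Hm.
  apply le_INR in Hm. assert (0 < / del) by (apply Rinv_0_lt_compat; auto).
  rewrite <- (Rinv_inv del). apply Rinv_lt_contravar. apply Rmult_lt_0_compat; [auto|].
  assert (0 <= INR m) by apply pos_INR. lra. lra.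
Qed.

Section Comparison.
Context {E : Type} (N : NormedSpace E) (C : E -> Prop)
  (T : option R) (U : E -> Prop) (HUo : is_open N U) (HUc : is_convex_set N U)
  (f : R -> E -> E)
  (Hfl : locally_lipschitz N (in_Ico0 T) U f)
  (Hqm : forall t, in_Ico0 T t -> quasi_monotone_increasing N C U (f t))
  (Hcv : forall t, in_Ico0 T t -> convex_map N C U (f t))
  (t0 : option R) (Ht0T : ext_le t0 T)
  (x1 x2 x3 : R -> E)
  (Hx1U : forall t, in_Ico0 t0 t -> U (x1 t))
  (Hx2U : forall t, in_Ico0 t0 t -> U (x2 t))
  (Hx3U : forall t, in_Ico0 t0 t -> U (x3 t))
  (Hx1 : forall t, in_Ico0 t0 t -> has_derivative_within N (in_Ico0 t0) x1 t (f t (x1 t)))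
  (Hx2 : forall t, in_Ico0 t0 t -> has_derivative_within N (in_Ico0 t0) x2 t (f t (x2 t)))
  (Hx3 : forall t, in_Ico0 t0 t -> has_derivative_within N (in_Ico0 t0) x3 t (f t (x3 t)))
  (lam : R) (Hlam : 0 <= lam <= 1)
  (P : E -> R) (M : R) (Hgap : gap_functional N C P M).

Definition dom := in_Ico0 t0.
Definition ycomb s := vadd N (vscal N lam (x1 s)) (vscal N (1 - lam) (x2 s)).
Definition defect s := vsub N (ycomb s) (x3 s).
Definition psi s := P (defect s).
Definition defect' s :=
  vsub N (vadd N (vscal N lam (f s (x1 s))) (vscal N (1 - lam) (f s (x2 s)))) (f s (x3 s)).

Let HM : 0 < M := gap_M_pos _ _ _ _ Hgap.

Lemma psi_nonneg s : 0 <= psi s.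
Proof. apply (gap_nonneg _ _ _ _ Hgap). Qed.

Lemma dom_T s : dom s -> in_Ico0 T s.
Proof.
  unfold dom, in_Ico0. intros [H1 H2]. split; auto. destruct T; auto. destruct t0; simpl in *; [lra|contradiction].
Qed.

Lemma dom_mono t1 u : dom t1 -> 0 <= u <= t1 -> dom u.
Proof. unfold dom, in_Ico0. intros [H1 H2] Hu. split. lra. destruct t0; auto. lra. Qed.

Lemma ycomb_U s : dom s -> U (ycomb s).
Proof. intro Hs. apply HUc; auto. Qed.

Lemma defect_deriv s : dom s -> has_derivative_within N dom defect s (defect' s).
Proof. intro Hs. apply deriv_comb; auto. Qed.

Lemma ycomb_cont s : dom s -> vcont N dom ycomb s.
Proof. intro Hs. apply vcont_comb; [exact (deriv_cont N _ x1 s _ (Hx1 s Hs))|exact (deriv_cont N _ x2 s _ (Hx2 s Hs))]. Qed.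

Lemma psi_cont s : dom s -> forall eps, 0 < eps -> exists del, 0 < del /\
  forall u, dom u -> Rabs (u - s) < del -> Rabs (psi u - psi s) < eps.
Proof.
  intros Hs eps He. destruct (deriv_cont N _ _ _ _ (defect_deriv s Hs) (eps / M)) as [del [Hd H]].
  apply Rdiv_lt_0_compat; auto.
  exists del. split; auto. intros u Du Hu. specialize (H u Du Hu).
  eapply Rle_lt_trans. apply (gap_lipschitz N C P M Hgap). unfold vdist in H.
  apply Rmult_lt_compat_l with (r := M) in H; auto. replace (M * (eps / M)) with eps in H by (field; lra). lra.
Qed.

Lemma ycomb_shift_dist s q : vnorm N (vsub N (ycomb s) (vadd N (x3 s) q)) = vnorm N (vsub N (defect s) q).
Proof. f_equal. unfold defect. vec_eq N (ycomb s :: x3 s :: q :: nil). Qed.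

(* Split defect' s = [comb of f - f(y)] + [f(y) - f(x3+q)]
   + [f(x3+q) - f(x3)]: the first term lies in -C by convexity, the last
   one is controlled by quasi-monotonicity since x3 <= x3 + q and l
   vanishes on q; only the middle term remains. *)
Lemma defect'_estimate s eta q l : dom s -> support_witness N C P M (defect s) eta q l ->
  U (vadd N (x3 s) q) ->
  l (defect' s) <= M * vnorm N (vsub N (f s (ycomb s)) (f s (vadd N (x3 s) q))).
Proof.
  intros Hs [Cq Hl Hle Hlq _ _] Hz.
  set (z := vadd N (x3 s) q).
  set (comb := vadd N (vscal N lam (f s (x1 s))) (vscal N (1 - lam) (f s (x2 s)))).
  assert (Hdd : defect' s = vadd N (vadd N (vsub N comb (f s (ycomb s))) (vsub N (f s (ycomb s)) (f s z)))
                                  (vsub N (f s z) (f s (x3 s)))).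
  { unfold defect', comb. vec_eq N (f s (x1 s) :: f s (x2 s) :: f s (x3 s) :: f s (ycomb s) :: f s z :: nil). }
  rewrite Hdd, !(proj1 Hl).
  assert (G1 : l (vsub N comb (f s (ycomb s))) <= 0).
  { eapply Rle_trans. apply Hle. apply (gap_cone _ _ _ _ Hgap). destruct (Hcv s (dom_T s Hs)) as [_ Hc]. apply Hc; auto. }
  assert (G2 : l (vsub N (f s (ycomb s)) (f s z)) <= M * vnorm N (vsub N (f s (ycomb s)) (f s z))).
  { eapply Rle_trans. apply Rle_abs. apply (dominated_bound N C P M Hgap); auto. }
  assert (G3 : l (vsub N (f s z) (f s (x3 s))) <= 0).
  { rewrite (lin_sub N l); auto.
    assert (Hcle : cle N C (x3 s) z).
    { unfold cle. replace (vsub N z (x3 s)) with q by (unfold z; vec_eq N (x3 s :: q :: nil)). auto. }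
    assert (Heq : - l (x3 s) = - l z) by (unfold z; rewrite (proj1 Hl), Hlq; ring).
    assert (Hq := Hqm s (dom_T s Hs) (x3 s) z (fun v => - l v) (Hx3U s Hs) Hz
                      (dominated_dual N C P M Hgap l Hl Hle) Hcle Heq).
    simpl in Hq. lra. }
  lra.
Qed.

Lemma lipschitz_quotients_bounded (K : E -> Prop) t1 (Ys Zs : nat -> E) (sg : nat -> R) :
  is_compact N K -> (forall x, K x -> U x) -> in_Ico0 T t1 ->
  ~ (forall n, K (Ys n) /\ K (Zs n) /\ 0 <= sg n <= t1 /\
       INR n * vnorm N (vsub N (Ys n) (Zs n)) < vnorm N (vsub N (f (sg n) (Ys n)) (f (sg n) (Zs n)))).
Proof.
  intros Kc KU Ht1 Hbad_all. destruct (Hfl K Kc KU t1 Ht1) as [L HL].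
  destruct (INR_unbounded L) as [n Hn]. destruct (Hbad_all n) as [KY [KZ [Hsg Hbad]]].
  assert (Hne : Ys n <> Zs n).
  { intro Heq. rewrite Heq in Hbad.
    replace (vsub N (Zs n) (Zs n)) with (vzero N) in Hbad by vec_eq N (Zs n :: nil).
    replace (vsub N (f (sg n) (Zs n)) (f (sg n) (Zs n))) with (vzero N) in Hbad by vec_eq N (f (sg n) (Zs n) :: nil).
    rewrite vnorm_0, Rmult_0_r in Hbad. lra. }
  assert (Hpos : 0 < vnorm N (vsub N (Ys n) (Zs n))).
  { destruct (vnorm_nonneg N (vsub N (Ys n) (Zs n))) as [H|H]; auto.
    exfalso. apply Hne, (vdist_eq0 N). unfold vdist. lra. }
  specialize (HL (sg n) (Ys n) (Zs n) Hsg KY KZ Hne).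
  assert (E1 : vnorm N (vsub N (Zs n) (Ys n)) = vnorm N (vsub N (Ys n) (Zs n))) by apply vdist_sym.
  assert (E2 : vnorm N (vsub N (f (sg n) (Zs n)) (f (sg n) (Ys n))) = vnorm N (vsub N (f (sg n) (Ys n)) (f (sg n) (Zs n))))
    by apply vdist_sym.
  rewrite E1, E2 in HL.
  apply Rmult_le_compat_r with (r := vnorm N (vsub N (Ys n) (Zs n))) in HL; [|lra].
  unfold Rdiv in HL. rewrite Rmult_assoc, Rinv_l, Rmult_1_r in HL by lra.
  assert (L * vnorm N (vsub N (Ys n) (Zs n)) < INR n * vnorm N (vsub N (Ys n) (Zs n))) by (apply Rmult_lt_compat_r; lra).
  lra.
Qed.

Definition quot_bounded (n : nat) s := forall eta q l, 0 < eta ->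
  support_witness N C P M (defect s) eta q l ->
  vnorm N (vsub N (f s (ycomb s)) (f s (vadd N (x3 s) q))) <= INR n * vnorm N (vsub N (ycomb s) (vadd N (x3 s) q)).

Section LocalStep.
Variables a t1 : R.
Hypothesis Dt1 : dom t1.
Hypothesis Ha : 0 <= a < t1.
Hypothesis Hpa : psi a = 0.

Lemma dom_a : dom a.
Proof. apply (dom_mono t1); auto; lra. Qed.

Lemma local_window : exists r0 d1, (forall z, vdist N z (ycomb a) < r0 -> U z) /\ 0 < d1 /\
  forall s, a < s < a + d1 -> s <= t1 -> vdist N (ycomb s) (ycomb a) < r0 / 2 /\ psi s < r0 / (2 * M).
Proof.
  destruct (HUo (ycomb a) (ycomb_U a dom_a)) as [r0 [Hr0 Hball]].
  destruct (ycomb_cont a dom_a (r0/2) ltac:(lra)) as [dy [Hdy Hy]].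
  destruct (psi_cont a dom_a (r0/(2*M))) as [dp [Hdp Hp]]. apply Rdiv_lt_0_compat; lra.
  exists r0, (Rmin dy dp). split; auto. split. apply Rmin_case; auto.
  intros s Hs Hst. assert (Ds : dom s) by (apply (dom_mono t1); auto; lra).
  assert (Hdist : Rabs (s - a) = s - a) by (apply Rabs_right; lra).
  assert (Rmin dy dp <= dy) by apply Rmin_l. assert (Rmin dy dp <= dp) by apply Rmin_r.
  split. apply Hy; auto; lra.
  assert (H1 : Rabs (psi s - psi a) < r0/(2*M)) by (apply Hp; auto; lra).
  rewrite Hpa, Rminus_0_r in H1. apply Rabs_def2 in H1. lra.
Qed.

Variables r0 d1 : R.
Hypothesis Hball : forall z, vdist N z (ycomb a) < r0 -> U z.
Hypothesis Hd1 : 0 < d1.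
Hypothesis Hnear : forall s, a < s < a + d1 -> s <= t1 ->
  vdist N (ycomb s) (ycomb a) < r0 / 2 /\ psi s < r0 / (2 * M).

Definition window s := a < s < a + d1 /\ s <= t1.

Lemma window_dom s : window s -> dom s.
Proof. intros [H1 H2]. apply (dom_mono t1); auto; lra. Qed.

Lemma window_ycomb_U s : window s -> U (ycomb s).
Proof.
  intros [H1 H2]. apply Hball. destruct (Hnear s H1 H2) as [Hy _].
  assert (H := vdist_nonneg N (ycomb s) (ycomb a)). lra.
Qed.

Lemma window_shift_U s eta q l : window s -> support_witness N C P M (defect s) eta q l -> U (vadd N (x3 s) q).
Proof.
  intros [Hs1 Hs2] Hsp. destruct (Hnear s Hs1 Hs2) as [Hys Hps]. apply Hball.
  eapply Rle_lt_trans. apply (vdist_tri N _ (ycomb s)).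
  assert (vdist N (vadd N (x3 s) q) (ycomb s) <= M * psi s).
  { rewrite vdist_sym. unfold vdist. rewrite ycomb_shift_dist. apply Hsp. }
  assert (M * psi s < r0 / 2).
  { apply Rmult_lt_compat_l with (r := M) in Hps; auto.
    replace (M * (r0 / (2 * M))) with (r0/2) in Hps by (field; lra). auto. }
  lra.
Qed.

(* If the difference quotients are bounded by n near [a], the left Dini
   derivative of psi is at most K psi with K = M^2 n + 1: take a support
   witness at sg, with tolerance h eps / 3, and combine the derivative of
   the defect with [defect'_estimate]. *)
Lemma dini_estimate n d2 :
  (forall s, window s -> s < a + d2 -> 0 < psi s -> quot_bounded n s) ->
  forall sg, window sg -> sg < a + d2 -> forall eps, 0 < eps -> exists h0, 0 < h0 /\
    forall h, 0 < h < h0 -> h <= sg - a -> psi sg - psi (sg - h) <= h * ((M * M * INR n + 1) * psi sg + eps).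
Proof.
  intros Hgood sg Wsg Hsg2 eps Heps. assert (Hn := pos_INR n).
  destruct (Rle_or_lt (psi sg) 0) as [Hz|Hpos].
  { exists 1. split. lra. intros h Hh Hh2. assert (psi sg = 0) by (assert (H := psi_nonneg sg); lra).
    rewrite H. assert (H2 := psi_nonneg (sg - h)). nra. }
  assert (Dsg := window_dom sg Wsg).
  destruct (deriv_left N dom defect sg (defect' sg) (defect_deriv sg Dsg) (eps / (3 * M))) as [h1 [Hh1 Hh1']].
  { apply Rdiv_lt_0_compat; lra. }
  exists h1. split; auto. intros h Hh Hh2.
  assert (Dsh : dom (sg - h)) by (apply (dom_mono t1); auto; destruct Wsg; lra).
  specialize (Hh1' h Hh Dsh).
  assert (Heta : 0 < h * eps / 3) by (apply Rdiv_lt_0_compat; nra).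
  destruct (gap_support _ _ _ _ Hgap (defect sg) (h * eps / 3) Hpos Heta) as [q [l Hsp]].
  assert (Hg := Hgood sg Wsg Hsg2 Hpos (h * eps / 3) q l Heta Hsp).
  assert (Hdd := defect'_estimate sg (h * eps / 3) q l Dsg Hsp (window_shift_U sg _ q l Wsg Hsp)).
  destruct Hsp as [Cq Hl Hle Hlq Hld Hdq].
  set (R0 := vsub N (vsub N (defect sg) (defect (sg - h))) (vscal N h (defect' sg))) in *.
  assert (Edd : l (defect sg) - l (defect (sg - h)) = l R0 + h * l (defect' sg)).
  { rewrite <- (lin_sub N l) by auto. rewrite <- (proj2 Hl), <- (proj1 Hl). f_equal.
    unfold R0. vec_eq N (defect sg :: defect (sg - h) :: defect' sg :: nil). }
  assert (HR0 : l R0 <= h * eps / 3).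
  { eapply Rle_trans. apply Rle_abs. eapply Rle_trans. apply (dominated_bound N C P M Hgap); auto.
    apply Rmult_le_compat_l with (r := M) in Hh1'; [|lra].
    replace (M * (h * (eps / (3 * M)))) with (h * eps / 3) in Hh1' by (field; lra). auto. }
  assert (Hldd : l (defect' sg) <= M * M * INR n * psi sg).
  { eapply Rle_trans. apply Hdd. rewrite ycomb_shift_dist in Hg.
    apply Rmult_le_compat_l with (r := M) in Hg; [|lra].
    apply Rmult_le_compat_l with (r := INR n) in Hdq; [|lra].
    apply Rmult_le_compat_l with (r := M) in Hdq; [|lra]. unfold psi. nra. }
  assert (Hlsh : l (defect (sg - h)) <= psi (sg - h)) by apply Hle.
  assert (h * l (defect' sg) <= h * (M * M * INR n * psi sg)) by (apply Rmult_le_compat_l; lra).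
  assert (0 <= h * psi sg) by (apply Rmult_le_pos; lra).
  assert (0 <= h * eps) by nra.
  unfold psi in *. nra.
Qed.

Lemma bounded_case : (exists n d2, 0 < d2 /\ forall s, window s -> s < a + d2 -> 0 < psi s -> quot_bounded n s) ->
  exists del, 0 < del /\ forall u, a <= u < a + del -> u <= t1 -> psi u = 0.
Proof.
  intros [n [d2 [Hd2 Hgood]]].
  set (K := M * M * INR n + 1).
  assert (HK : 0 < K) by (unfold K; assert (0 <= M * M * INR n) by (apply Rmult_le_pos; [nra|apply pos_INR]); lra).
  set (w0 := Rmin (Rmin d1 d2) (Rmin (/ (4 * K)) (t1 - a))).
  assert (Hw0 : 0 < w0) by (unfold w0; repeat apply Rmin_case; try lra; apply Rinv_0_lt_compat; lra).
  assert (Hw1 : w0 <= d1) by (unfold w0; eapply Rle_trans; apply Rmin_l).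
  assert (Hw2 : w0 <= d2) by (unfold w0; eapply Rle_trans; [apply Rmin_l|apply Rmin_r]).
  assert (Hw3 : w0 <= / (4 * K)) by (unfold w0; eapply Rle_trans; [apply Rmin_r|apply Rmin_l]).
  assert (Hw4 : w0 <= t1 - a) by (unfold w0; eapply Rle_trans; [apply Rmin_r|apply Rmin_r]).
  set (b := a + w0 / 2).
  assert (Hsmall : 2 * K * (b - a) < 1).
  { unfold b. replace (a + w0/2 - a) with (w0/2) by ring.
    assert (K * w0 <= K * / (4 * K)) by (apply Rmult_le_compat_l; lra).
    replace (K * / (4 * K)) with (1/4) in H by (field; lra). lra. }
  assert (Dab : forall s, a <= s <= b -> dom s) by (intros s Hs; apply (dom_mono t1); auto; unfold b in Hs; lra).
  exists (w0 / 2). split. lra. intros u Hu Hu2.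
  apply (dini_gronwall psi a b K ltac:(unfold b; lra) HK Hsmall).
  - intros s Hs eps Heps. destruct (psi_cont s (Dab s Hs) eps Heps) as [del [Hdel Hdel2]].
    exists del. split; [exact Hdel|]. intros u0 Hu0 Hu1. apply Hdel2; auto.
  - intros; apply psi_nonneg.
  - auto.
  - intros sg Hsg. apply (dini_estimate n d2 Hgood sg); unfold window, b in *; lra.
  - unfold b in *. lra.
Qed.

Definition bad_point (n : nat) (p : R * E) := window (fst p) /\ fst p < a + / (INR n + 1) /\
  exists eta l, 0 < eta /\ support_witness N C P M (defect (fst p)) eta (snd p) l /\
    INR n * vnorm N (vsub N (ycomb (fst p)) (vadd N (x3 (fst p)) (snd p))) <
    vnorm N (vsub N (f (fst p) (ycomb (fst p))) (f (fst p) (vadd N (x3 (fst p)) (snd p)))).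

Lemma bad_points_converge (sel : nat -> R * E) : (forall n, bad_point n (sel n)) ->
  (forall eps, 0 < eps -> exists M0, forall n, (M0 <= n)%nat -> vdist N (ycomb (fst (sel n))) (ycomb a) < eps) /\
  (forall eps, 0 < eps -> exists M0, forall n, (M0 <= n)%nat ->
     vdist N (vadd N (x3 (fst (sel n))) (snd (sel n))) (ycomb a) < eps).
Proof.
  intros Hsel. set (sg := fun n => fst (sel n)).
  assert (sg_close : forall del, 0 < del -> exists n0, forall m, (n0 <= m)%nat -> Rabs (sg m - a) < del /\ window (sg m)).
  { intros del Hdel. destruct (small_inv del Hdel) as [n0 Hn0]. exists n0. intros m Hm.
    destruct (Hsel m) as [Hw [Hlt _]]. specialize (Hn0 m Hm). split; auto.
    destruct Hw as [H1 H2]. unfold sg. rewrite Rabs_right by lra. lra. }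
  assert (Yconv : forall eps, 0 < eps -> exists M0, forall n, (M0 <= n)%nat -> vdist N (ycomb (sg n)) (ycomb a) < eps).
  { intros eps Heps. destruct (ycomb_cont a dom_a eps Heps) as [del [Hdel Hdel2]].
    destruct (sg_close del Hdel) as [n0 Hn0]. exists n0. intros m Hm. destruct (Hn0 m Hm) as [H1 H2].
    apply Hdel2; auto. apply window_dom; auto. }
  split; auto.
  intros eps Heps. destruct (Yconv (eps/2) ltac:(lra)) as [n0 Hn0].
  destruct (psi_cont a dom_a (eps / (2 * M))) as [del [Hdel Hdel2]]. apply Rdiv_lt_0_compat; lra.
  destruct (sg_close del Hdel) as [n1 Hn1]. exists (Nat.max n0 n1). intros m Hm.
  destruct (Hn1 m ltac:(lia)) as [H1 H2]. specialize (Hdel2 (sg m) (window_dom _ H2) H1).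
  rewrite Hpa, Rminus_0_r in Hdel2. apply Rabs_def2 in Hdel2.
  specialize (Hn0 m ltac:(lia)).
  eapply Rle_lt_trans. apply (vdist_tri N _ (ycomb (sg m))).
  assert (ZY : vdist N (vadd N (x3 (sg m)) (snd (sel m))) (ycomb (sg m)) <= M * psi (sg m)).
  { destruct (Hsel m) as [_ [_ [eta [l [_ [Hsp _]]]]]]. rewrite vdist_sym. unfold vdist.
    rewrite ycomb_shift_dist. apply Hsp. }
  assert (M * psi (sg m) < eps / 2).
  { destruct Hdel2 as [Hd _]. apply Rmult_lt_compat_l with (r := M) in Hd; auto.
    replace (M * (eps / (2 * M))) with (eps/2) in Hd by (field; lra). auto. }
  change (fst (sel m)) with (sg m). lra.
Qed.

(* the quotients are bounded near [a]: otherwise there are bad points for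
   every n, and together with their common limit y(a) they form a compact
   subset of U contradicting [lipschitz_quotients_bounded] *)
Lemma quotients_bounded : exists n d2, 0 < d2 /\
  forall s, window s -> s < a + d2 -> 0 < psi s -> quot_bounded n s.
Proof.
  apply NNPP; intro Hneg.
  assert (Bad : forall n : nat, exists p, bad_point n p).
  { intro n. apply NNPP; intro Hno. apply Hneg. exists n, (/ (INR n + 1)). split.
    { apply Rinv_0_lt_compat. assert (H := pos_INR n). lra. }
    intros s Hs Hs2 Hps eta q l Heta Hsp. apply Rnot_lt_le. intro Hlt. apply Hno. exists (s, q).
    split; auto. split; auto. exists eta, l. auto. }
  destruct (choice _ Bad) as [sel Hsel].
  set (sg := fun n => fst (sel n)).
  set (Ys := fun n => ycomb (sg n)).
  set (Zs := fun n => vadd N (x3 (sg n)) (snd (sel n))).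
  destruct (bad_points_converge sel Hsel) as [Yconv Zconv].
  set (Kset := fun x => x = ycomb a \/ (exists n, x = Ys n) \/ (exists n, x = Zs n)).
  assert (Kc : is_compact N Kset) by (apply seq_compact; auto).
  assert (KU : forall x, Kset x -> U x).
  { intros x [->|[[n ->]|[n ->]]].
    - apply ycomb_U, dom_a.
    - apply window_ycomb_U, (Hsel n).
    - destruct (Hsel n) as [Hw [_ [eta [l [_ [Hsp _]]]]]]. apply (window_shift_U _ _ _ _ Hw Hsp). }
  apply (lipschitz_quotients_bounded Kset t1 Ys Zs sg Kc KU (dom_T t1 Dt1)). intro n.
  destruct (Hsel n) as [Hw [_ [eta [l [_ [_ Hbad]]]]]]. change (window (sg n)) in Hw.
  split; [right; left; exists n; auto|]. split; [right; right; exists n; auto|].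
  split; [destruct Hw; lra|exact Hbad].
Qed.

End LocalStep.

Lemma local_step a t1 : dom t1 -> 0 <= a < t1 -> psi a = 0 ->
  exists del, 0 < del /\ forall u, a <= u < a + del -> u <= t1 -> psi u = 0.
Proof.
  intros Dt1 Ha Hpa.
  destruct (local_window a t1 Dt1 Ha Hpa) as [r0 [d1 [Hball [Hd1 Hnear]]]].
  apply (bounded_case a t1 Dt1 Ha Hpa r0 d1 Hball Hd1 Hnear).
  apply (quotients_bounded a t1 Dt1 Ha Hpa r0 d1 Hball Hnear).
Qed.

Lemma psi_zero_closed t1 s : dom t1 -> 0 < s <= t1 -> (forall u, 0 <= u < s -> psi u = 0) -> psi s = 0.
Proof.
  intros Dt1 Hs Hall. apply NNPP; intro Hne.
  assert (Hp : 0 < psi s) by (assert (H := psi_nonneg s); lra).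
  destruct (psi_cont s (dom_mono t1 s Dt1 ltac:(lra)) (psi s) Hp) as [del [Hdel H]].
  set (u := s - Rmin del s / 2).
  assert (Hm : 0 < Rmin del s) by (apply Rmin_case; lra).
  assert (Hm2 : Rmin del s <= del) by apply Rmin_l. assert (Hm3 : Rmin del s <= s) by apply Rmin_r.
  specialize (H u (dom_mono t1 u Dt1 ltac:(unfold u; lra))). rewrite Hall in H by (unfold u; lra).
  assert (Rabs (u - s) < del) by (unfold u; rewrite Rabs_left by lra; lra).
  specialize (H H0). rewrite Rminus_0_l, Rabs_Ropp, Rabs_right in H by lra. lra.
Qed.

Theorem comparison (H0 : x3 0 = ycomb 0) : forall t, dom t -> cle N C (x3 t) (ycomb t).
Proof.
  intros t1 Dt1. assert (Ht1 : 0 <= t1) by apply Dt1.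
  assert (All : forall u, 0 <= u <= t1 -> psi u = 0).
  { apply real_ind; auto.
    - unfold psi, defect. rewrite H0. replace (vsub N _ _) with (vzero N) by vec_eq N (ycomb 0 :: nil).
      apply (gap_at_0 N C P M Hgap).
    - intros s Hs Hall. apply (local_step s t1 Dt1 Hs (Hall s ltac:(lra))).
    - intros s Hs Hall. apply (psi_zero_closed t1 s Dt1 Hs Hall). }
  apply (gap_zero _ _ _ _ Hgap). specialize (All t1 ltac:(lra)). unfold psi, defect in All. lra.
Qed.

End Comparison.

Theorem mainTheorem7 (E : Type) (N : NormedSpace E) (C : E -> Prop)
  (HC : is_proper_cone N C) (HCcl : is_closed N C)
  (Halt : has_nonempty_interior N C \/ is_complete N \/ is_distance_set N C)
  (T : option R) (HT : ext_pos T)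
  (U : E -> Prop) (HUo : is_open N U) (HUc : is_convex_set N U)
  (f : R -> E -> E)
  (Hfc : continuous_on_IxU N (in_Ico0 T) U f)
  (Hfl : locally_lipschitz N (in_Ico0 T) U f)
  (Hqm : forall t, in_Ico0 T t -> quasi_monotone_increasing N C U (f t))
  (Hcv : forall t, in_Ico0 T t -> convex_map N C U (f t))
  (t0 : option R) (Ht0 : ext_pos t0) (Ht0T : ext_le t0 T)
  (x1 x2 x3 : R -> E)
  (Hx1U : forall t, in_Ico0 t0 t -> U (x1 t))
  (Hx2U : forall t, in_Ico0 t0 t -> U (x2 t))
  (Hx3U : forall t, in_Ico0 t0 t -> U (x3 t))
  (Hx1 : forall t, in_Ico0 t0 t -> has_derivative_within N (in_Ico0 t0) x1 t (f t (x1 t)))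
  (Hx2 : forall t, in_Ico0 t0 t -> has_derivative_within N (in_Ico0 t0) x2 t (f t (x2 t)))
  (Hx3 : forall t, in_Ico0 t0 t -> has_derivative_within N (in_Ico0 t0) x3 t (f t (x3 t)))
  (lam : R) (Hlam : 0 <= lam <= 1)
  (H0 : x3 0 = vadd N (vscal N lam (x1 0)) (vscal N (1 - lam) (x2 0))) :
  forall t, in_Ico0 t0 t ->
    cle N C (x3 t) (vadd N (vscal N lam (x1 t)) (vscal N (1 - lam) (x2 t))).
Proof.
  destruct (gap_functional_exists N C HC HCcl Halt) as [P [M Hgap]].
  exact (comparison N C T U HUo HUc f Hfl Hqm Hcv t0 Ht0T x1 x2 x3 Hx1U Hx2U Hx3U Hx1 Hx2 Hx3
           lam Hlam P M Hgap H0).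
Qed.
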